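(* Let $(\mathcal G,\mathcal B,\mathcal H)$ be either $(G,\beta,H)$ or $(G^L,\beta^L,H^L)$ with $L\ge2$. There is a constant $C$ depending only on the shape-regularity of the mesh family such that for every simplex $K\in\mathcal T_h$ and every $\phi\in S^1_{h,PD}$, $$\int_K\|\pi_h[\mathcal B(\phi)]-\mathcal B(\phi)\|^2+\max_{m,p=1,\dots,d}\int_K\|\Lambda_{m,p}(\phi)-\mathcal B(\phi)\,\delta_{mp}\|^2\le C\,h^2\int_K\|\nabla\phi\|^2 ,$$ where $\delta_{mp}$ is the Kronecker delta.
   Context: $d\in\{2,3\}$; $\phi:\psi=\mathrm{tr}(\phi^T\psi)$, $\|\phi\|=(\phi:\phi)^{1/2}$, $\|\nabla\phi\|^2=\sum_{i,j}\|\nabla\phi_{ij}\|^2$. For symmetric positive definite $\phi=O^TDO$ and $g:(0,\infty)\to\mathbb R$, $g(\phi):=O^Tg(D)O$. $G=\ln$, $\beta(s)=s$, $H=\ln$; $G^L(s)=\ln s$ for $0<s\le L$, $s/L+\ln L-1$ for $s\ge L$; $\beta^L(s)=\min\{s,L\}$; $H^L(s)=\ln s$ for $s\ge1/L$, $Ls+\ln(1/L)-1$ for $s\le1/L$. $D\subset\mathbb R^d$ a bounded polytope, $\mathcal T_h$ a member of a regular (shape-regular) family of conforming simplicial partitions with mesh size $h$. $S^1_h$: continuous piecewise linear symmetric matrix fields; $S^1_{h,PD}$: those $\phi\in S^1_h$ with $\phi(P)$ positive definite at every vertex $P$; $\pi_h$: nodal interpolation at vertices onto continuous piecewise linears. Operator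 $\Lambda$: for $\phi\in S^1_{h,PD}$ and a simplex $K$ with vertices $P_0,\dots,P_d$, $B_K$ the matrix with columns $P_j-P_0$; for $j=1,\dots,d$, $a_j=\mathcal B(\phi(P_j))$, $a_0=\mathcal B(\phi(P_0))$, $g_j=\mathcal G'(\phi(P_j))$, $g_0=\mathcal G'(\phi(P_0))$; if $(a_j-a_0):(g_j-g_0)\ne0$, $\hat\Lambda_j=(1-\lambda_j)a_j+\lambda_ja_0$ with $\lambda_j=\frac{\mathrm{tr}(\mathcal H(g_j))-\mathrm{tr}(\mathcal H(g_0))-a_j:(g_j-g_0)}{(a_0-a_j):(g_j-g_0)}$, else $\hat\Lambda_j=a_j$; on $K$, $\Lambda_{m,p}(\phi)=\sum_{j=1}^d[(B_K^T)^{-1}]_{mj}\hat\Lambda_j[B_K^T]_{jp}$. *)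

From Stdlib Require Import Reals Lra ClassicalEpsilon.
Open Scope R_scope.

(* Points of R^d: nat -> R (coordinates 0..d-1 are meaningful).
   Matrices: nat -> nat -> R (entries with indices < d are meaningful). *)
Definition Pt := nat -> R.
Definition Mat := nat -> nat -> R.

Fixpoint sumR (n : nat) (f : nat -> R) : R :=
  match n with O => 0 | S n' => sumR n' f + f n' end.

Definition kron (a b : nat) : R := if Nat.eqb a b then 1 else 0.

Definition madd (A B : Mat) : Mat := fun a b => A a b + B a b.
Definition msub (A B : Mat) : Mat := fun a b => A a b - B a b.
Definition mscale (s : R) (A : Mat) : Mat := fun a b => s * A a b.
Definition mtr (d : nat) (A : Mat) : R := sumR d (fun a => A a a).
Definition frob (d : nat) (A B : Mat) : R :=
  sumR d (fun a => sumR d (fun b => A a b * B a b)).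
Definition normsq (d : nat) (A : Mat) : R := frob d A A.

Definition symmetric (d : nat) (A : Mat) : Prop :=
  forall a b, (a < d)%nat -> (b < d)%nat -> A a b = A b a.
Definition posdef (d : nat) (A : Mat) : Prop :=
  symmetric d A /\
  forall v : Pt, (exists a, (a < d)%nat /\ v a <> 0) ->
    0 < sumR d (fun a => sumR d (fun b => v a * A a b * v b)).

(* A = O^T D O with O orthogonal and D = diag(D_0..D_{d-1}) *)
Definition spec_decomp (d : nat) (A O : Mat) (D : nat -> R) : Prop :=
  (forall a b, (a < d)%nat -> (b < d)%nat ->
     sumR d (fun k => O k a * O k b) = kron a b) /\
  (forall a b, (a < d)%nat -> (b < d)%nat ->
     A a b = sumR d (fun k => O k a * D k * O k b)).

(* g(A) := O^T g(D) O for a (chosen) spectral decomposition A = O^T D O *)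
Definition mfun (d : nat) (g : R -> R) (A : Mat) : Mat :=
  match excluded_middle_informative
          (exists OD : Mat * (nat -> R), spec_decomp d A (fst OD) (snd OD)) with
  | left h =>
      let OD := proj1_sig (constructive_indefinite_description _ h) in
      fun a b => sumR d (fun k => fst OD k a * g (snd OD k) * fst OD k b)
  | right _ => fun _ _ => 0
  end.

(* derivative of a real function at s (0 if not differentiable) *)
Definition deriv (f : R -> R) (s : R) : R :=
  match excluded_middle_informative (exists l, derivable_pt_lim f s l) with
  | left h => proj1_sig (constructive_indefinite_description _ h)
  | right _ => 0
  end.

(* reg = None : (G, beta, H) = (ln, id, ln);
   reg = Some L : (G^L, beta^L, H^L) *)
Definition Gfun (reg : option R) (s : R) : R :=
  match reg with
  | None => ln s
  | Some L => if Rle_dec s L then ln s else s / L + ln L - 1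
  end.
Definition Bfun (reg : option R) (s : R) : R :=
  match reg with
  | None => s
  | Some L => Rmin s L
  end.
Definition Hfun (reg : option R) (s : R) : R :=
  match reg with
  | None => ln s
  | Some L => if Rle_dec (/ L) s then ln s else L * s + ln (/ L) - 1
  end.
Definition Gpfun (reg : option R) : R -> R := deriv (Gfun reg).

(* Simplex K with vertices P 0, ..., P d  (P j p = p-th coordinate of P_j). *)
Definition inK (d : nat) (P : nat -> Pt) (x : Pt) : Prop :=
  exists lam : nat -> R,
    (forall j, (j <= d)%nat -> 0 <= lam j) /\
    sumR (S d) lam = 1 /\
    forall p, (p < d)%nat -> x p = sumR (S d) (fun j => lam j * P j p).

Definition edist (d : nat) (u v : Pt) : R :=
  sqrt (sumR d (fun p => (u p - v p) ^ 2)).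

(* B_K^T : row j (0-based, j < d) is P_{j+1} - P_0 *)
Definition BT (P : nat -> Pt) : Mat := fun j p => P (S j) p - P O p.

Definition BTinv (d : nat) (P : nat -> Pt) : Mat :=
  match excluded_middle_informative
          (exists N : Mat, forall m p, (m < d)%nat -> (p < d)%nat ->
             sumR d (fun k => N m k * BT P k p) = kron m p) with
  | left h => proj1_sig (constructive_indefinite_description _ h)
  | right _ => fun _ _ => 0
  end.

(* local coordinates mu = B_K^{-1} (x - P_0); mu_j is the barycentric
   coordinate of vertex P_{j+1} *)
Definition mu (d : nat) (P : nat -> Pt) (x : Pt) (j : nat) : R :=
  sumR d (fun p => BTinv d P p j * (x p - P O p)).

Definition p1interp (d : nat) (P : nat -> Pt) (V : nat -> Mat) (x : Pt) : Mat :=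
  madd (V O) (fun a b => sumR d (fun j => mu d P x j * (V (S j) a b - V O a b))).

(* phi in S^1_h restricted to K, with vertex values A j = phi(P_j) *)
Definition phiK (d : nat) (P : nat -> Pt) (A : nat -> Mat) : Pt -> Mat :=
  p1interp d P A.

Definition upd (x : Pt) (k : nat) (t : R) : Pt :=
  fun i => if Nat.eqb i k then t else x i.

Definition partial (k : nat) (f : Pt -> R) (x : Pt) : R :=
  deriv (fun t => f (upd x k t)) (x k).

Definition gradsq (d : nat) (phi : Pt -> Mat) (x : Pt) : R :=
  sumR d (fun a => sumR d (fun b => sumR d (fun k =>
    (partial k (fun y => phi y a b) x) ^ 2))).

(* Riemann integral over [a,b] (0 if not Riemann integrable) *)
Definition RI (f : R -> R) (a b : R) : R :=
  match excluded_middle_informative (inhabited (Riemann_integrable f a b)) with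
  | left h => RiemannInt (epsilon h (fun _ => True))
  | right _ => 0
  end.

Fixpoint iint (n : nat) (M : R) (F : Pt -> R) (x : Pt) : R :=
  match n with
  | O => F x
  | S n' => RI (fun t => iint n' M F (upd x n' t)) (- M) M
  end.

Definition boxbound (d : nat) (P : nat -> Pt) : R :=
  1 + sumR (S d) (fun j => sumR d (fun p => Rabs (P j p))).

Definition intK (d : nat) (P : nat -> Pt) (f : Pt -> R) : R :=
  iint d (boxbound d P)
    (fun x => if excluded_middle_informative (inK d P x) then f x else 0)
    (fun _ => 0).

Definition bigmax2 (d : nat) (f : nat -> nat -> R) : R :=
  List.fold_right Rmax 0
    (List.flat_map (fun m => List.map (fun p => f m p) (List.seq 0 d))
                   (List.seq 0 d)).

(* hat Lambda_j for paper index j = S j' (j' < d) or j = 0 *)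
Definition Lhat (d : nat) (reg : option R) (A : nat -> Mat) (j : nat) : Mat :=
  let a := fun i => mfun d (Bfun reg) (A i) in
  let g := fun i => mfun d (Gpfun reg) (A i) in
  let den := frob d (msub (a j) (a O)) (msub (g j) (g O)) in
  if Req_EM_T den 0 then a j
  else
    let lam := (mtr d (mfun d (Hfun reg) (g j)) - mtr d (mfun d (Hfun reg) (g O))
                - frob d (a j) (msub (g j) (g O)))
               / frob d (msub (a O) (a j)) (msub (g j) (g O)) in
    madd (mscale (1 - lam) (a j)) (mscale lam (a O)).

(* Lambda_{m,p}(phi) on K, 0-based m p < d *)
Definition Lambda (d : nat) (reg : option R) (P : nat -> Pt) (A : nat -> Mat)
    (m p : nat) : Mat :=
  fun a b => sumR d (fun j => BTinv d P m j * BT P j p * Lhat d reg A (S j) a b).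

From Stdlib Require Import Reals Lra Lia Psatz Classical ClassicalEpsilon FunctionalExtensionality List.
Open Scope R_scope.

(* On a simplex K the field phi is affine, so its gradient is a constant
   matrix family and every vertex difference phi(P_i) - phi(P_k) is bounded
   by |P_i - P_k|^2 ||grad phi||^2 <= h^2 ||grad phi||^2 (Cauchy-Schwarz).
   The scalar map B (= id or min(., L)) is 1-Lipschitz; through a spectral
   decomposition (whose existence we prove for d = 2, 3) the matrix function
   B(.) is 1-Lipschitz in the Frobenius norm.  Hence for x in K every
   B(phi(P_i)) lies within h ||grad phi|| of B(phi(x)), and so does every
   convex combination of them: the P1 interpolant of B(phi), and each
   hat-Lambda_j, which is a convex combination of B(phi(P_j)) and
   B(phi(P_0)) because its weight is a ratio of two log-det Bregman
   divergences.  Lambda_{m,p} - delta_mp B(phi) mixes these with coefficients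
   (B_K^T)^{-1}_{mj} (B_K^T)_{jp}, bounded by sigma/2 since the inscribed ball
   of radius r forces |(B_K^T)^{-1}| <= 1/(2r).  Finally the pointwise bound
   c ||grad phi||^2 integrates over K: we show that the iterated Riemann
   integrals defining intK are monotone, representing every partial integral
   of an indicator of a polytope times a Lipschitz function again in that
   form.  The theorem holds with C = 1 + 3 sigma^2. *)

Lemma sumR_ext n f g : (forall i, (i < n)%nat -> f i = g i) -> sumR n f = sumR n g.
Proof. induction n; simpl; intros; auto. rewrite IHn by (intros; apply H; lia). rewrite H by lia. auto. Qed.

Lemma sumR_plus n f g : sumR n (fun i => f i + g i) = sumR n f + sumR n g.
Proof. induction n; simpl; [lra|]. rewrite IHn. lra. Qed.

Lemma sumR_minus n f g : sumR n (fun i => f i - g i) = sumR n f - sumR n g.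
Proof. induction n; simpl; [lra|]. rewrite IHn. lra. Qed.

Lemma sumR_scal n c f : sumR n (fun i => c * f i) = c * sumR n f.
Proof. induction n; simpl; [lra|]. rewrite IHn. lra. Qed.

Lemma sumR_scalr n c f : sumR n (fun i => f i * c) = sumR n f * c.
Proof. induction n; simpl; [lra|]. rewrite IHn. lra. Qed.

Lemma sumR_0 n : sumR n (fun _ => 0) = 0.
Proof. induction n; simpl; [lra|]. rewrite IHn. lra. Qed.

Lemma sumR_const n k : sumR n (fun _ => k) = INR n * k.
Proof. induction n; simpl; [ring|]. rewrite IHn. destruct n; simpl; ring. Qed.

Lemma sumR_swap n m f :
  sumR n (fun i => sumR m (fun j => f i j)) = sumR m (fun j => sumR n (fun i => f i j)).
Proof.
  induction n; simpl. { rewrite sumR_0. auto. }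
  rewrite IHn. rewrite <- sumR_plus. auto.
Qed.

Lemma sumR_shift n f : sumR (S n) f = f O + sumR n (fun i => f (S i)).
Proof. induction n; simpl in *; [lra|]. rewrite IHn. lra. Qed.

Lemma sumR_le n f g : (forall i, (i < n)%nat -> f i <= g i) -> sumR n f <= sumR n g.
Proof. induction n; simpl; intros; [lra|]. assert (f n <= g n) by (apply H; lia).
  assert (sumR n f <= sumR n g) by (apply IHn; intros; apply H; lia). lra. Qed.

Lemma sumR_nonneg n f : (forall i, (i < n)%nat -> 0 <= f i) -> 0 <= sumR n f.
Proof. intros. rewrite <- (sumR_0 n). apply sumR_le. auto. Qed.

Lemma sumR_term_le n f k : (forall i, (i < n)%nat -> 0 <= f i) -> (k < n)%nat -> f k <= sumR n f.
Proof.
  induction n; intros; [lia|]. simpl.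
  destruct (Nat.eq_dec k n).
  - subst. assert (0 <= sumR n f) by (apply sumR_nonneg; intros; apply H; lia). lra.
  - assert (f k <= sumR n f) by (apply IHn; [intros; apply H; lia | lia]).
    assert (0 <= f n) by (apply H; lia). lra.
Qed.

Lemma sumR_abs n f : Rabs (sumR n f) <= sumR n (fun i => Rabs (f i)).
Proof. induction n; simpl. rewrite Rabs_R0; lra.
  eapply Rle_trans. apply Rabs_triang. lra. Qed.

Lemma kron_sym a b : kron a b = kron b a.
Proof. unfold kron. rewrite Nat.eqb_sym. auto. Qed.

Lemma sumR_kron_l n j f : (j < n)%nat -> sumR n (fun i => kron i j * f i) = f j.
Proof.
  induction n; intros; [lia|]. simpl. unfold kron at 2.
  destruct (Nat.eq_dec j n).
  - subst. rewrite Nat.eqb_refl. rewrite (sumR_ext _ _ (fun _ => 0)). rewrite sumR_0. lra.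
    intros. unfold kron. replace (Nat.eqb i n) with false. lra. symmetry. apply Nat.eqb_neq. lia.
  - replace (Nat.eqb n j) with false. rewrite IHn by lia. lra. symmetry. apply Nat.eqb_neq. lia.
Qed.

Lemma sumR_kron_r n j f : (j < n)%nat -> sumR n (fun i => kron j i * f i) = f j.
Proof.
  intros. rewrite <- (sumR_kron_l n j f) by auto. apply sumR_ext. intros.
  apply f_equal2; auto. apply kron_sym.
Qed.

Lemma sumR_kron_pt n m (f : nat -> R) : (m < n)%nat -> sumR n (fun q => f q * kron q m) = f m.
Proof. intros. rewrite (sumR_ext n _ (fun q => kron q m * f q)) by (intros; ring). apply sumR_kron_l; auto. Qed.

Lemma sumR_kron_out n m (f : nat -> R) : (n <= m)%nat -> sumR n (fun q => f q * kron q m) = 0.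
Proof. intros. rewrite <- (sumR_0 n). apply sumR_ext. intros. unfold kron.
  replace (Nat.eqb i m) with false. ring. symmetry. apply Nat.eqb_neq. lia. Qed.

Lemma sumR_CS n u v :
  (sumR n (fun i => u i * v i)) ^ 2 <= sumR n (fun i => u i ^ 2) * sumR n (fun i => v i ^ 2).
Proof.
  induction n; cbn [sumR]. lra.
  set (a := sumR n (fun i => u i * v i)) in *.
  set (b := sumR n (fun i => u i ^ 2)) in *.
  set (c := sumR n (fun i => v i ^ 2)) in *.
  assert (0 <= b) by (apply sumR_nonneg; intros; nra).
  assert (0 <= c) by (apply sumR_nonneg; intros; nra).
  clearbody a b c.
  (* the cross term 2 a x y is dominated by b y^2 + c x^2 because a^2 <= b c *)
  assert (Hcross : 2 * a * (u n * v n) <= b * v n ^ 2 + c * u n ^ 2).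
  { destruct (Req_dec b 0).
    - assert (a = 0) by nra. subst. nra.
    - assert (0 < b) by lra.
      pose proof (pow2_ge_0 (b * v n - a * u n)).
      assert (b * (b * v n ^ 2 + c * u n ^ 2 - 2 * a * (u n * v n)) >= 0) by nra.
      destruct (Rle_dec 0 (b * v n ^ 2 + c * u n ^ 2 - 2 * a * (u n * v n))); nra. }
  assert (E: (a + u n * v n) ^ 2 = a^2 + 2 * a * (u n * v n) + (u n * v n)^2) by ring.
  rewrite E. nra.
Qed.

Lemma sumR_wCS n c u :
  (sumR n (fun i => c i * u i)) ^ 2 <= sumR n (fun i => Rabs (c i)) * sumR n (fun i => Rabs (c i) * u i ^ 2).
Proof.
  pose (s i := sqrt (Rabs (c i))).
  assert (Hs : forall i, s i * s i = Rabs (c i)) by (intros; unfold s; apply sqrt_sqrt; apply Rabs_pos).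
  assert (E1 : Rabs (sumR n (fun i => c i * u i)) <= sumR n (fun i => s i * (s i * Rabs (u i)))).
  { eapply Rle_trans. apply sumR_abs. apply sumR_le. intros. rewrite Rabs_mult.
    rewrite <- Rmult_assoc, Hs. lra. }
  pose proof (sumR_CS n s (fun i => s i * Rabs (u i))) as HCS.
  assert (E2 : sumR n (fun i => s i ^ 2) = sumR n (fun i => Rabs (c i))).
  { apply sumR_ext; intros. rewrite <- Hs. ring. }
  assert (E3 : sumR n (fun i => (s i * Rabs (u i)) ^ 2) = sumR n (fun i => Rabs (c i) * u i ^ 2)).
  { apply sumR_ext; intros. rewrite <- Hs. rewrite <- (pow2_abs (u i)). ring. }
  rewrite E2, E3 in HCS.
  assert (0 <= sumR n (fun i => s i * (s i * Rabs (u i)))).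
  { apply sumR_nonneg. intros. rewrite <- Rmult_assoc. rewrite Hs. apply Rmult_le_pos; apply Rabs_pos. }
  rewrite <- pow2_abs. pose proof (Rabs_pos (sumR n (fun i => c i * u i))). nra.
Qed.

(* Square matrices of size 2 and 3: a one-sided inverse is two-sided.
   We use the explicit adjugate adj(X) X = det(X) I and det(XY) = det X det Y. *)

Definition mmul (d : nat) (X Y : Mat) : Mat := fun i j => sumR d (fun k => X i k * Y k j).

Definition det2 (X : Mat) : R := X 0%nat 0%nat * X 1%nat 1%nat - X 0%nat 1%nat * X 1%nat 0%nat.
Definition det3 (X : Mat) : R :=
  X 0%nat 0%nat * (X 1%nat 1%nat * X 2%nat 2%nat - X 1%nat 2%nat * X 2%nat 1%nat)
  - X 0%nat 1%nat * (X 1%nat 0%nat * X 2%nat 2%nat - X 1%nat 2%nat * X 2%nat 0%nat)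
  + X 0%nat 2%nat * (X 1%nat 0%nat * X 2%nat 1%nat - X 1%nat 1%nat * X 2%nat 0%nat).
Definition adj2 (X : Mat) : Mat := fun i j =>
  match i, j with
  | 0, 0 => X 1%nat 1%nat | 0, 1 => - X 0%nat 1%nat
  | 1, 0 => - X 1%nat 0%nat | 1, 1 => X 0%nat 0%nat | _, _ => 0 end.
Definition minor3 (X : Mat) (a b c e : nat) : R := X a c * X b e - X a e * X b c.
Definition adj3 (X : Mat) : Mat := fun i j =>
  match i, j with
  | 0, 0 => minor3 X 1 2 1 2 | 0, 1 => - minor3 X 0 2 1 2 | 0, 2 => minor3 X 0 1 1 2
  | 1, 0 => - minor3 X 1 2 0 2 | 1, 1 => minor3 X 0 2 0 2 | 1, 2 => - minor3 X 0 1 0 2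
  | 2, 0 => minor3 X 1 2 0 1 | 2, 1 => - minor3 X 0 2 0 1 | 2, 2 => minor3 X 0 1 0 1
  | _, _ => 0 end.

Definition detd (d : nat) (X : Mat) : R := if Nat.eqb d 2 then det2 X else det3 X.
Definition adjd (d : nat) (X : Mat) : Mat := if Nat.eqb d 2 then adj2 X else adj3 X.

Lemma adjd_spec d X : (d = 2 \/ d = 3)%nat -> forall i j, (i < d)%nat -> (j < d)%nat ->
  sumR d (fun k => adjd d X i k * X k j) = detd d X * kron i j.
Proof.
  intros [-> | ->] i j Hi Hj; unfold adjd, detd; simpl;
  (destruct i as [|[|[|i]]]; try lia); (destruct j as [|[|[|j]]]; try lia);
  unfold kron, adj2, adj3, det2, det3, minor3; simpl; ring.
Qed.

Lemma detd_mul d X Y : (d = 2 \/ d = 3)%nat -> detd d (mmul d X Y) = detd d X * detd d Y.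
Proof. intros [-> | ->]; unfold detd, mmul, det2, det3; simpl; ring. Qed.

Lemma detd_ext d X Y : (d = 2 \/ d = 3)%nat ->
  (forall i j, (i < d)%nat -> (j < d)%nat -> X i j = Y i j) -> detd d X = detd d Y.
Proof. intros [-> | ->] H; unfold detd, det2, det3; simpl; rewrite !H by lia; auto. Qed.

Lemma detd_id d : (d = 2 \/ d = 3)%nat -> detd d kron = 1.
Proof. intros [-> | ->]; unfold detd, det2, det3, kron; simpl; ring. Qed.

(* If adj X = D X^{-1} from the left with D <> 0, every right inverse Y of X
   equals D^{-1} adj, hence is also a left inverse. *)
Lemma right_inv_is_left_inv d X Y (adj : Mat) (D : R) : D <> 0 ->
  (forall i j, (i < d)%nat -> (j < d)%nat -> sumR d (fun k => adj i k * X k j) = D * kron i j) ->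
  (forall i j, (i < d)%nat -> (j < d)%nat -> sumR d (fun k => X i k * Y k j) = kron i j) ->
  (forall i j, (i < d)%nat -> (j < d)%nat -> sumR d (fun k => Y i k * X k j) = kron i j).
Proof.
  intros HD Hadj HXY.
  assert (HY : forall i j, (i < d)%nat -> (j < d)%nat -> D * Y i j = adj i j).
  { intros i j Hi Hj.
    transitivity (sumR d (fun k => (D * kron i k) * Y k j)).
    { rewrite <- (sumR_kron_r d i (fun k => D * Y k j)) by auto.
      apply sumR_ext; intros; ring. }
    transitivity (sumR d (fun k => sumR d (fun l => adj i l * X l k) * Y k j)).
    { apply sumR_ext; intros. rewrite Hadj; auto. }
    transitivity (sumR d (fun l => adj i l * sumR d (fun k => X l k * Y k j))).
    { rewrite (sumR_ext d _ (fun k => sumR d (fun l => adj i l * X l k * Y k j))).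
      2:{ intros. rewrite <- sumR_scalr. auto. }
      rewrite sumR_swap. apply sumR_ext. intros. rewrite <- sumR_scal. apply sumR_ext. intros. ring. }
    transitivity (sumR d (fun l => kron j l * adj i l)).
    { apply sumR_ext. intros. rewrite HXY by auto. rewrite kron_sym. ring. }
    apply sumR_kron_r; auto. }
  intros i j Hi Hj.
  apply (Rmult_eq_reg_l D); auto.
  rewrite <- sumR_scal.
  rewrite (sumR_ext d _ (fun k => adj i k * X k j)).
  2:{ intros. rewrite <- HY by auto. ring. }
  rewrite Hadj; auto.
Qed.

Lemma inv_comm d X Y : (d = 2 \/ d = 3)%nat ->
  (forall i j, (i < d)%nat -> (j < d)%nat -> sumR d (fun k => X i k * Y k j) = kron i j) ->
  (forall i j, (i < d)%nat -> (j < d)%nat -> sumR d (fun k => Y i k * X k j) = kron i j).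
Proof.
  intros Hd HXY.
  assert (E : detd d X * detd d Y = 1).
  { rewrite <- detd_mul by auto. rewrite (detd_ext d _ kron); auto. apply detd_id; auto. }
  apply (right_inv_is_left_inv d X Y (adjd d X) (detd d X)).
  - intro H0. rewrite H0 in E. lra.
  - apply adjd_spec; auto.
  - auto.
Qed.

(* Orthogonal matrices and spectral decompositions.  In [spec_decomp d A O D]
   the rows O k are orthonormal eigenvectors of A with eigenvalues D k. *)

Definition orthoC (d : nat) (O : Mat) : Prop :=
  forall a b, (a < d)%nat -> (b < d)%nat -> sumR d (fun k => O k a * O k b) = kron a b.
Definition orthoR (d : nat) (O : Mat) : Prop :=
  forall i j, (i < d)%nat -> (j < d)%nat -> sumR d (fun a => O i a * O j a) = kron i j.

Lemma orthoC_R d O : (d = 2 \/ d = 3)%nat -> orthoC d O -> orthoR d O.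
Proof. intros Hd H i j Hi Hj. apply (inv_comm d (fun i k => O k i) O Hd); auto. Qed.

Lemma orthoR_C d O : (d = 2 \/ d = 3)%nat -> orthoR d O -> orthoC d O.
Proof. intros Hd H a b Ha Hb. apply (inv_comm d O (fun i k => O k i) Hd); auto. Qed.

Definition overlap (d : nat) (O Q : Mat) (i k : nat) : R := sumR d (fun a => O i a * Q k a).

Lemma overlap_row d O Q : orthoR d O -> orthoC d Q -> forall i, (i < d)%nat ->
  sumR d (fun k => overlap d O Q i k ^ 2) = 1.
Proof.
  intros HO HQ i Hi. unfold overlap.
  transitivity (sumR d (fun k => sumR d (fun a => sumR d (fun b => O i a * O i b * (Q k a * Q k b))))).
  { apply sumR_ext; intros k Hk. simpl. rewrite Rmult_1_r. rewrite <- sumR_scalr.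
    apply sumR_ext; intros a Ha. rewrite <- sumR_scal. apply sumR_ext; intros; ring. }
  rewrite sumR_swap.
  transitivity (sumR d (fun a => sumR d (fun b => O i a * O i b * kron a b))).
  { apply sumR_ext; intros a Ha. rewrite sumR_swap. apply sumR_ext; intros b Hb.
    rewrite sumR_scal. rewrite HQ; auto. }
  transitivity (sumR d (fun a => O i a * O i a)).
  { apply sumR_ext; intros a Ha. rewrite <- (sumR_kron_r d a (fun b => O i a * O i b)) by auto.
    apply sumR_ext; intros. rewrite kron_sym. ring. }
  rewrite HO by auto. unfold kron. rewrite Nat.eqb_refl. auto.
Qed.

Lemma overlap_col d O Q : orthoC d O -> orthoR d Q -> forall k, (k < d)%nat ->
  sumR d (fun i => overlap d O Q i k ^ 2) = 1.
Proof.
  intros HO HQ k Hk.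
  rewrite (sumR_ext d _ (fun i => overlap d Q O k i ^ 2)).
  2:{ intros. unfold overlap. f_equal. apply sumR_ext. intros; ring. }
  apply overlap_row; auto.
Qed.

Lemma quad_decomp d A Q E u v :
  (forall a b, (a < d)%nat -> (b < d)%nat -> A a b = sumR d (fun k => Q k a * E k * Q k b)) ->
  sumR d (fun a => sumR d (fun b => u a * A a b * v b)) =
  sumR d (fun j => sumR d (fun a => u a * Q j a) * E j * sumR d (fun b => Q j b * v b)).
Proof.
  intros HA.
  transitivity (sumR d (fun a => sumR d (fun b => sumR d (fun j => u a * Q j a * E j * (Q j b * v b))))).
  { apply sumR_ext; intros a Ha. apply sumR_ext; intros b Hb. rewrite HA by auto.
    rewrite <- sumR_scal, <- sumR_scalr. apply sumR_ext; intros; ring. }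
  rewrite (sumR_ext d _ (fun a => sumR d (fun j => sumR d (fun b => u a * Q j a * E j * (Q j b * v b))))).
  2:{ intros. apply sumR_swap. }
  rewrite sumR_swap. apply sumR_ext; intros j Hj.
  rewrite (sumR_ext d _ (fun a => u a * Q j a * E j * sumR d (fun b => Q j b * v b))).
  2:{ intros. rewrite <- sumR_scal. auto. }
  rewrite sumR_scalr, sumR_scalr. auto.
Qed.

(* For two decompositions of the same matrix the overlap intertwines the
   eigenvalues: it vanishes between eigenvectors of distinct eigenvalues. *)
Lemma overlap_intertwines d A O D O' D' : (d = 2 \/ d = 3)%nat ->
  spec_decomp d A O D -> spec_decomp d A O' D' ->
  forall i k, (i < d)%nat -> (k < d)%nat -> D' i * overlap d O' O i k = overlap d O' O i k * D k.
Proof.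
  intros Hd [HOc HA] [HO'c HA'] i k Hi Hk.
  pose proof (orthoC_R d O Hd HOc) as HOr. pose proof (orthoC_R d O' Hd HO'c) as HO'r.
  pose proof (quad_decomp d A O' D' (fun a => O' i a) (fun b => O k b) HA') as E1.
  pose proof (quad_decomp d A O D (fun a => O' i a) (fun b => O k b) HA) as E2.
  cbv beta in E1, E2. rewrite E1 in E2. clear E1.
  rewrite (sumR_ext d (fun j => sumR d (fun a => O' i a * O' j a) * D' j * sumR d (fun b => O' j b * O k b))
                   (fun j => kron i j * (D' j * overlap d O' O j k))) in E2.
  2:{ intros j Hj. rewrite HO'r by auto. unfold overlap. ring. }
  rewrite (sumR_ext d (fun j => sumR d (fun a => O' i a * O j a) * D j * sumR d (fun b => O j b * O k b))
                   (fun j => kron k j * (overlap d O' O i j * D j))) in E2.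
  2:{ intros j Hj. rewrite (sumR_ext d (fun b => O j b * O k b) (fun b => O k b * O j b)) by (intros; ring).
      rewrite HOr by auto. unfold overlap. ring. }
  rewrite !sumR_kron_r in E2 by auto. auto.
Qed.

Lemma overlap_expand d O O' : orthoC d O -> forall i b, (b < d)%nat ->
  O' i b = sumR d (fun k => overlap d O' O i k * O k b).
Proof.
  intros HOc i b Hb. unfold overlap.
  rewrite (sumR_ext d _ (fun k => sumR d (fun a => O' i a * O k a * O k b))).
  2:{ intros. rewrite <- sumR_scalr. auto. }
  rewrite sumR_swap.
  rewrite (sumR_ext d _ (fun a => kron a b * O' i a)).
  2:{ intros. rewrite <- HOc by auto. rewrite <- sumR_scalr. apply sumR_ext. intros; ring. }
  rewrite sumR_kron_l; auto.
Qed.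

Lemma overlap_contract d O O' : orthoC d O' -> forall a k, (a < d)%nat ->
  sumR d (fun i => O' i a * overlap d O' O i k) = O k a.
Proof.
  intros HO'c a k Ha. unfold overlap.
  rewrite (sumR_ext d _ (fun i => sumR d (fun c => O' i a * O' i c * O k c))).
  2:{ intros. rewrite <- sumR_scal. apply sumR_ext; intros; ring. }
  rewrite sumR_swap.
  rewrite (sumR_ext d _ (fun c => kron a c * O k c)).
  2:{ intros. rewrite <- HO'c by auto. rewrite <- sumR_scalr. auto. }
  rewrite sumR_kron_r; auto.
Qed.

Lemma spec_fun_unique d A O D O' D' (g : R -> R) : (d = 2 \/ d = 3)%nat ->
  spec_decomp d A O D -> spec_decomp d A O' D' ->
  forall a b, (a < d)%nat -> (b < d)%nat ->
  sumR d (fun k => O' k a * g (D' k) * O' k b) = sumR d (fun k => O k a * g (D k) * O k b).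
Proof.
  intros Hd HS HS'. pose proof HS as [HOc _]. pose proof HS' as [HO'c _].
  set (W := overlap d O' O).
  assert (Hg : forall i k, (i < d)%nat -> (k < d)%nat -> W i k * g (D' i) = W i k * g (D k)).
  { intros i k Hi Hk. destruct (Req_dec (W i k) 0) as [E|E].
    - rewrite E; ring.
    - assert (D' i = D k).
      { pose proof (overlap_intertwines d A O D O' D' Hd HS HS' i k Hi Hk).
        apply (Rmult_eq_reg_l (W i k)); auto. unfold W. lra. }
      rewrite H; auto. }
  intros a b Ha Hb.
  transitivity (sumR d (fun i => sumR d (fun k => O' i a * (W i k * g (D' i)) * O k b))).
  { apply sumR_ext; intros i Hi. rewrite (overlap_expand d O O' HOc i b) by auto.
    rewrite <- sumR_scal. apply sumR_ext; intros; unfold W; ring. }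
  transitivity (sumR d (fun i => sumR d (fun k => O' i a * W i k * (g (D k) * O k b)))).
  { apply sumR_ext; intros i Hi. apply sumR_ext; intros k Hk. rewrite Hg by auto. ring. }
  rewrite sumR_swap. apply sumR_ext; intros k Hk.
  rewrite sumR_scalr. unfold W. rewrite overlap_contract by auto. ring.
Qed.

Lemma mfun_eq d A O D (g : R -> R) : (d = 2 \/ d = 3)%nat ->
  spec_decomp d A O D ->
  forall a b, (a < d)%nat -> (b < d)%nat ->
  mfun d g A a b = sumR d (fun k => O k a * g (D k) * O k b).
Proof.
  intros Hd HS a b Ha Hb. unfold mfun.
  destruct excluded_middle_informative as [h|h].
  - destruct (constructive_indefinite_description _ h) as [[O' D'] HS']. simpl.
    apply (spec_fun_unique d A O D O' D' g Hd HS HS' a b Ha Hb).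
  - exfalso. apply h. exists (O, D). auto.
Qed.

Lemma mfun_spec d g A O D : (d = 2 \/ d = 3)%nat -> spec_decomp d A O D ->
  spec_decomp d (mfun d g A) O (fun k => g (D k)).
Proof. intros Hd HS. split. apply HS. intros. apply mfun_eq; auto. Qed.

Lemma spec_ext d X O p p' : spec_decomp d X O p -> (forall k, (k < d)%nat -> p k = p' k) ->
  spec_decomp d X O p'.
Proof. intros [H1 H2] E. split; auto. intros. rewrite H2 by auto. apply sumR_ext; intros. rewrite E; auto. Qed.

Lemma frob_ext d X Y X' Y' :
  (forall a b, (a < d)%nat -> (b < d)%nat -> X a b = X' a b) ->
  (forall a b, (a < d)%nat -> (b < d)%nat -> Y a b = Y' a b) ->
  frob d X Y = frob d X' Y'.
Proof. intros. unfold frob. apply sumR_ext; intros. apply sumR_ext; intros. rewrite H, H0; auto. Qed.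

Lemma normsq_ext d X Y : (forall a b, (a < d)%nat -> (b < d)%nat -> X a b = Y a b) -> normsq d X = normsq d Y.
Proof. intros. unfold normsq. apply frob_ext; auto. Qed.

Lemma frob_sym d X Y : frob d X Y = frob d Y X.
Proof. unfold frob. apply sumR_ext; intros. apply sumR_ext; intros. ring. Qed.

Lemma frob_sub_l d X Y Z : frob d (msub X Y) Z = frob d X Z - frob d Y Z.
Proof. unfold frob, msub. rewrite <- sumR_minus. apply sumR_ext; intros.
  rewrite <- sumR_minus. apply sumR_ext; intros. ring. Qed.

Lemma frob_sub_r d X Y Z : frob d Z (msub X Y) = frob d Z X - frob d Z Y.
Proof. rewrite frob_sym, frob_sub_l, (frob_sym d X), (frob_sym d Y). auto. Qed.

Lemma normsq_msub d X Y : normsq d (msub X Y) = frob d X X - 2 * frob d X Y + frob d Y Y.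
Proof. unfold normsq. rewrite frob_sub_l, !frob_sub_r. rewrite (frob_sym d Y X). ring. Qed.

Lemma frob_decomp d X Y O p Q q :
  (forall a b, (a < d)%nat -> (b < d)%nat -> X a b = sumR d (fun i => O i a * p i * O i b)) ->
  (forall a b, (a < d)%nat -> (b < d)%nat -> Y a b = sumR d (fun k => Q k a * q k * Q k b)) ->
  frob d X Y = sumR d (fun i => sumR d (fun k => p i * q k * overlap d O Q i k ^ 2)).
Proof.
  intros HX HY. unfold frob, overlap.
  transitivity (sumR d (fun a => sumR d (fun b => sumR d (fun i => sumR d (fun k =>
     p i * q k * ((O i a * Q k a) * (O i b * Q k b))))))).
  { apply sumR_ext; intros a Ha. apply sumR_ext; intros b Hb. rewrite HX, HY by auto.
    rewrite <- sumR_scalr. apply sumR_ext; intros i Hi. rewrite <- sumR_scal.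
    apply sumR_ext; intros; ring. }
  rewrite (sumR_ext d _ (fun a => sumR d (fun i => sumR d (fun b => sumR d (fun k =>
     p i * q k * ((O i a * Q k a) * (O i b * Q k b))))))).
  2:{ intros. apply sumR_swap. }
  rewrite sumR_swap. apply sumR_ext; intros i Hi.
  rewrite (sumR_ext d _ (fun a => sumR d (fun k => sumR d (fun b =>
     p i * q k * ((O i a * Q k a) * (O i b * Q k b)))))).
  2:{ intros. apply sumR_swap. }
  rewrite sumR_swap. apply sumR_ext; intros k Hk.
  rewrite (sumR_ext d _ (fun a => p i * q k * (O i a * Q k a) * sumR d (fun b => O i b * Q k b))).
  2:{ intros. rewrite <- sumR_scal. apply sumR_ext; intros; ring. }
  rewrite sumR_scalr, sumR_scal. ring.
Qed.

Lemma frob_same_basis d X Y O p q : (d = 2 \/ d = 3)%nat -> spec_decomp d X O p ->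
  spec_decomp d Y O q -> frob d X Y = sumR d (fun i => p i * q i).
Proof.
  intros Hd [HO HX] [_ HY]. pose proof (orthoC_R d O Hd HO) as HOr.
  rewrite (frob_decomp d X Y O p O q HX HY).
  apply sumR_ext; intros i Hi.
  rewrite (sumR_ext d _ (fun k => kron i k * (p i * q k))).
  2:{ intros. unfold overlap. rewrite HOr by auto. unfold kron. destruct (Nat.eqb i i0); simpl; ring. }
  rewrite sumR_kron_r by auto. ring.
Qed.

Lemma normsq_diff_decomp d X Y O p Q q : (d = 2 \/ d = 3)%nat ->
  spec_decomp d X O p -> spec_decomp d Y Q q ->
  normsq d (msub X Y) = sumR d (fun i => sumR d (fun k => (p i - q k) ^ 2 * overlap d O Q i k ^ 2)).
Proof.
  intros Hd HX HY.
  pose proof HX as [HOc HXe]. pose proof HY as [HQc HYe].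
  pose proof (orthoC_R d O Hd HOc) as HOr. pose proof (orthoC_R d Q Hd HQc) as HQr.
  rewrite normsq_msub. rewrite (frob_same_basis d X X O p p Hd HX HX), (frob_same_basis d Y Y Q q q Hd HY HY).
  rewrite (frob_decomp d X Y O p Q q HXe HYe).
  set (W := overlap d O Q).
  assert (E1 : sumR d (fun i => p i * p i) = sumR d (fun i => sumR d (fun k => p i ^ 2 * W i k ^ 2))).
  { apply sumR_ext; intros i Hi. rewrite sumR_scal. unfold W. rewrite overlap_row; auto. ring. }
  assert (E2 : sumR d (fun k => q k * q k) = sumR d (fun i => sumR d (fun k => q k ^ 2 * W i k ^ 2))).
  { rewrite sumR_swap. apply sumR_ext; intros k Hk. rewrite sumR_scal. unfold W. rewrite overlap_col; auto. ring. }
  rewrite E1, E2. rewrite <- sumR_scal.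
  rewrite <- sumR_minus, <- sumR_plus. apply sumR_ext; intros i Hi.
  rewrite <- sumR_scal, <- sumR_minus, <- sumR_plus. apply sumR_ext; intros; ring.
Qed.

Lemma mfun_lip d X Y O p Q q (f : R -> R) : (d = 2 \/ d = 3)%nat ->
  spec_decomp d X O p -> spec_decomp d Y Q q ->
  (forall u v, Rabs (f u - f v) <= Rabs (u - v)) ->
  normsq d (msub (mfun d f X) (mfun d f Y)) <= normsq d (msub X Y).
Proof.
  intros Hd HX HY Hf.
  rewrite (normsq_diff_decomp d _ _ O _ Q _ Hd (mfun_spec d f X O p Hd HX) (mfun_spec d f Y Q q Hd HY)).
  rewrite (normsq_diff_decomp d _ _ O _ Q _ Hd HX HY).
  apply sumR_le; intros i Hi. apply sumR_le; intros k Hk.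
  apply Rmult_le_compat_r. apply pow2_ge_0.
  rewrite <- (pow2_abs (f (p i) - f (q k))), <- (pow2_abs (p i - q k)).
  pose proof (Hf (p i) (q k)). pose proof (Rabs_pos (f (p i) - f (q k))). nra.
Qed.

Lemma mtr_decomp d X O p : (d = 2 \/ d = 3)%nat -> spec_decomp d X O p -> mtr d X = sumR d p.
Proof.
  intros Hd [HOc HX]. pose proof (orthoC_R d O Hd HOc) as HOr. unfold mtr.
  rewrite (sumR_ext d _ (fun a => sumR d (fun k => O k a * p k * O k a))) by (intros; apply HX; auto).
  rewrite sumR_swap. apply sumR_ext; intros k Hk.
  rewrite (sumR_ext d _ (fun a => p k * (O k a * O k a))) by (intros; ring).
  rewrite sumR_scal, HOr by auto. unfold kron; rewrite Nat.eqb_refl. ring.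
Qed.

Lemma posdef_eig d A O D : (d = 2 \/ d = 3)%nat -> spec_decomp d A O D -> posdef d A ->
  forall k, (k < d)%nat -> 0 < D k.
Proof.
  intros Hd HS [Hsym Hpd] k Hk. pose proof HS as [HOc HA]. pose proof (orthoC_R d O Hd HOc) as HOr.
  pose proof (quad_decomp d A O D (O k) (O k) HA) as E.
  rewrite (sumR_ext d (fun j => sumR d (fun a => O k a * O j a) * D j * sumR d (fun b => O j b * O k b))
                   (fun j => kron k j * D j)) in E.
  2:{ intros j Hj. rewrite HOr, HOr by auto. rewrite (kron_sym j k). unfold kron. destruct (Nat.eqb k j); ring. }
  rewrite sumR_kron_r in E by auto. rewrite <- E. apply Hpd.
  apply NNPP. intro Hn.
  assert (Z : sumR d (fun a => O k a * O k a) = 0).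
  { rewrite <- (sumR_0 d). apply sumR_ext. intros a Ha. destruct (Req_dec (O k a) 0) as [E0|E0].
    rewrite E0; ring. exfalso; apply Hn; eauto. }
  rewrite HOr in Z by auto. unfold kron in Z. rewrite Nat.eqb_refl in Z. lra.
Qed.

(* In dimension 2 an explicit rotation diagonalises the matrix; in dimension 3
   a real root of the characteristic cubic gives a unit eigenvector u, and the
   restriction to the plane orthogonal to u is diagonalised as in dimension 2. *)

Lemma eig_to_spec d S O D : (d = 2 \/ d = 3)%nat -> symmetric d S -> orthoR d O ->
  (forall k a, (k < d)%nat -> (a < d)%nat -> sumR d (fun b => S a b * O k b) = D k * O k a) ->
  spec_decomp d S O D.
Proof.
  intros Hd HS HO HE. pose proof (orthoR_C d O Hd HO) as HOc.
  split; auto. intros a b Ha Hb.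
  transitivity (sumR d (fun c => S a c * kron c b)).
  { rewrite sumR_kron_pt; auto. }
  transitivity (sumR d (fun c => sumR d (fun k => S a c * O k c * O k b))).
  { apply sumR_ext; intros. rewrite <- HOc by auto. rewrite <- sumR_scal. apply sumR_ext; intros; ring. }
  rewrite sumR_swap. apply sumR_ext; intros k Hk. rewrite sumR_scalr. rewrite HE by auto. ring.
Qed.

Lemma rot2 al be ga : exists c s m1 m2, c ^ 2 + s ^ 2 = 1 /\
  al * c + be * s = m1 * c /\ be * c + ga * s = m1 * s /\
  al * (- s) + be * c = m2 * (- s) /\ be * (- s) + ga * c = m2 * c.
Proof.
  destruct (Req_dec be 0) as [Hb|Hb].
  - exists 1, 0, al, ga. subst. repeat split; ring.
  - set (dsc := (ga - al) ^ 2 + 4 * be ^ 2).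
    assert (Hd : 0 <= dsc) by (unfold dsc; pose proof (pow2_ge_0 (ga - al)); pose proof (pow2_ge_0 be); lra).
    set (sq := sqrt dsc).
    assert (Hsq : sq * sq = dsc) by (apply sqrt_sqrt; auto).
    set (m := ((ga - al) + sq) / 2).
    assert (Hm : m ^ 2 - (ga - al) * m - be ^ 2 = 0).
    { unfold m. unfold dsc in Hsq. nra. }
    set (n := sqrt (be ^ 2 + m ^ 2)).
    assert (Hn2 : n * n = be ^ 2 + m ^ 2) by (apply sqrt_sqrt; pose proof (pow2_ge_0 m); pose proof (pow2_ge_0 be); lra).
    assert (Hnp : 0 < n). { unfold n. apply sqrt_lt_R0. pose proof (pow2_ge_0 m).
      assert (0 < be ^ 2) by (pose proof (Rsqr_pos_lt be Hb); unfold Rsqr in *; lra). lra. }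
    exists (be / n), (m / n), (al + m), (ga - m).
    repeat split.
    + field_simplify; [|lra]. rewrite <- Hn2. field. lra.
    + field. lra.
    + assert (E: be^2 + ga*m = (al+m)*m) by nra. unfold Rdiv.
      replace (be*(be*/n) + ga*(m*/n)) with ((be^2 + ga*m) * /n) by ring. rewrite E. ring.
    + assert (E: be^2 - al*m = (ga-m)*(-m)) by nra. unfold Rdiv.
      replace (al * - (m * / n) + be * (be * / n)) with ((be^2 - al*m) * /n) by ring. rewrite E. ring.
    + field. lra.
Qed.

Definition M2 (a b c e : R) : Mat := fun i j =>
  match i, j with O, O => a | O, S O => b | S O, O => c | S O, S O => e | _, _ => 0 end.

Lemma spec2 S : symmetric 2 S -> exists O D, spec_decomp 2 S O D.
Proof.
  intros HS.
  destruct (rot2 (S 0 0)%nat (S 0 1)%nat (S 1 1)%nat) as (c & s & m1 & m2 & H1 & H2 & H3 & H4 & H5).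
  exists (M2 c s (- s) c), (fun k => match k with O => m1 | _ => m2 end).
  assert (E : S 1%nat 0%nat = S 0%nat 1%nat) by (apply HS; lia).
  apply eig_to_spec; auto.
  - intros i j Hi Hj. destruct i as [|[|i]]; try lia; destruct j as [|[|j]]; try lia;
      unfold kron, M2; simpl; nra.
  - intros k a Hk Ha. destruct k as [|[|k]]; try lia; destruct a as [|[|a]]; try lia;
      unfold M2; simpl; rewrite ?E; lra.
Qed.

(* Cauchy-type bounds used to locate a sign change of a cubic. *)
Lemma abs_bound_lin x R0 : 1 <= R0 -> x * R0 <= Rabs x * R0 ^ 2.
Proof. intros. pose proof (Rle_abs x). pose proof (Rabs_pos x).
  assert (x * R0 <= Rabs x * R0) by (apply Rmult_le_compat_r; lra).
  assert (0 <= Rabs x * R0 * (R0 - 1)) by (apply Rmult_le_pos; [apply Rmult_le_pos|]; lra).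
  replace (Rabs x * R0 ^ 2) with (Rabs x * R0 + Rabs x * R0 * (R0 - 1)) by ring. lra. Qed.
Lemma abs_bound_const x R0 : 1 <= R0 -> x <= Rabs x * R0 ^ 2.
Proof. intros. pose proof (abs_bound_lin (Rabs x) R0 H). rewrite Rabs_Rabsolu in H0.
  pose proof (Rle_abs x). pose proof (Rabs_pos x).
  assert (Rabs x <= Rabs x * R0) by (replace (Rabs x) with (Rabs x * 1) at 1 by ring; apply Rmult_le_compat_l; lra).
  lra. Qed.
Lemma abs_bound_quad x R0 : 1 <= R0 -> x * R0 ^ 2 <= Rabs x * R0 ^ 2.
Proof. intros. apply Rmult_le_compat_r. apply pow2_ge_0. apply Rle_abs. Qed.

Lemma cubic_root a b c : exists t, - t ^ 3 + a * t ^ 2 + b * t + c = 0.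
Proof.
  set (f := fun t => - t ^ 3 + a * t ^ 2 + b * t + c).
  set (R0 := 1 + Rabs a + Rabs b + Rabs c).
  assert (HR : 1 <= R0) by (unfold R0; pose proof (Rabs_pos a); pose proof (Rabs_pos b); pose proof (Rabs_pos c); lra).
  assert (Hc : continuity f) by (unfold f; reg).
  assert (ER: R0 = 1 + Rabs a + Rabs b + Rabs c) by reflexivity.
  assert (R0 ^ 3 = (1 + Rabs a + Rabs b + Rabs c) * R0 ^ 2) by (rewrite <- ER; ring).
  assert (0 < R0 ^ 2) by (apply pow_lt; lra).
  assert (Hup : f R0 <= 0).
  { unfold f. pose proof (abs_bound_quad a R0 HR). pose proof (abs_bound_lin b R0 HR).
    pose proof (abs_bound_const c R0 HR). nra. }
  assert (Hdn : 0 <= f (- R0)).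
  { unfold f. pose proof (abs_bound_quad (-a) R0 HR). pose proof (abs_bound_lin b R0 HR).
    pose proof (abs_bound_const (-c) R0 HR).
    rewrite Rabs_Ropp in *. replace ((- R0) ^ 3) with (- (R0 ^ 3)) by ring.
    replace ((- R0) ^ 2) with (R0 ^ 2) by ring. nra. }
  destruct (IVT_cor f (- R0) R0 Hc) as [t [_ Ht]]. lra. nra.
  exists t. apply Ht.
Qed.

Definition vec3 (x y z : R) : Pt := fun i =>
  match i with O => x | S O => y | S (S O) => z | _ => 0 end.
Definition sq3 (u : Pt) : R := u 0%nat ^ 2 + u 1%nat ^ 2 + u 2%nat ^ 2.
Definition cross3 (u v : Pt) : Pt :=
  vec3 (u 1%nat * v 2%nat - u 2%nat * v 1%nat) (u 2%nat * v 0%nat - u 0%nat * v 2%nat)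
       (u 0%nat * v 1%nat - u 1%nat * v 0%nat).
Definition row (M : Mat) (i : nat) : Pt := fun b => M i b.

Lemma sq3_zero u : sq3 u = 0 -> u 0%nat = 0 /\ u 1%nat = 0 /\ u 2%nat = 0.
Proof. unfold sq3. intros. pose proof (pow2_ge_0 (u 0%nat)). pose proof (pow2_ge_0 (u 1%nat)).
  pose proof (pow2_ge_0 (u 2%nat)). repeat split; nra. Qed.

Lemma sq3_cases u : sq3 u = 0 \/ 0 < sq3 u.
Proof. unfold sq3. pose proof (pow2_ge_0 (u 0%nat)). pose proof (pow2_ge_0 (u 1%nat)).
  pose proof (pow2_ge_0 (u 2%nat)). lra. Qed.

Ltac check_kernel := let a := fresh "a" in let Ha := fresh "Ha" in
  intros a Ha; destruct a as [|[|[|a]]]; try lia; unfold vec3; simpl.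

(* A 3x3 matrix whose rows are pairwise parallel has a nonzero kernel vector:
   any vector orthogonal to a nonzero row. *)
Lemma null3_parallel_rows (M : Mat) :
  sq3 (cross3 (row M 0) (row M 1)) = 0 -> sq3 (cross3 (row M 0) (row M 2)) = 0 ->
  sq3 (cross3 (row M 1) (row M 2)) = 0 ->
  exists v : Pt, 0 < sq3 v /\ forall a, (a < 3)%nat -> sumR 3 (fun b => M a b * v b) = 0.
Proof.
  intros Z1 Z2 Z3.
  apply sq3_zero in Z1, Z2, Z3. cbv [cross3 vec3 row] in Z1, Z2, Z3.
  destruct Z1 as (Z1a & Z1b & Z1c). destruct Z2 as (Z2a & Z2b & Z2c). destruct Z3 as (Z3a & Z3b & Z3c).
  unfold sq3.
  set (a00 := M 0%nat 0%nat) in *. set (a01 := M 0%nat 1%nat) in *. set (a02 := M 0%nat 2%nat) in *.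
  set (a10 := M 1%nat 0%nat) in *. set (a11 := M 1%nat 1%nat) in *. set (a12 := M 1%nat 2%nat) in *.
  set (a20 := M 2%nat 0%nat) in *. set (a21 := M 2%nat 1%nat) in *. set (a22 := M 2%nat 2%nat) in *.
  (* choose the first nonzero row (x, y, z) and the kernel vector (0, z, -y) or (-z, 0, x) *)
  destruct (sq3_cases (vec3 a00 a01 a02)) as [R0|R0]; unfold sq3, vec3 in R0; simpl in R0.
  - assert (a00 = 0 /\ a01 = 0 /\ a02 = 0) as (R0a & R0b & R0c) by (split; [|split]; nra).
    destruct (sq3_cases (vec3 a10 a11 a12)) as [R1|R1]; unfold sq3, vec3 in R1; simpl in R1.
    + assert (a10 = 0 /\ a11 = 0 /\ a12 = 0) as (R1a & R1b & R1c) by (split; [|split]; nra).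
      destruct (sq3_cases (vec3 a20 a21 a22)) as [R2|R2]; unfold sq3, vec3 in R2; simpl in R2.
      * exists (vec3 1 0 0). split. unfold vec3; simpl; lra.
        assert (a20 = 0 /\ a21 = 0 /\ a22 = 0) as (R2a & R2b & R2c) by (split; [|split]; nra).
        check_kernel; fold a00 a01 a02 a10 a11 a12 a20 a21 a22;
          rewrite ?R0a, ?R0b, ?R0c, ?R1a, ?R1b, ?R1c, ?R2a, ?R2b, ?R2c; lra.
      * destruct (Req_dec (a22 ^ 2 + a21 ^ 2) 0) as [S2|S2].
        -- exists (vec3 (- a22) 0 a20). split.
           ++ unfold vec3; simpl. nra.
           ++ check_kernel; fold a00 a01 a02 a10 a11 a12 a20 a21 a22; rewrite ?R0a, ?R0b, ?R0c, ?R1a, ?R1b, ?R1c; nra.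
        -- exists (vec3 0 a22 (- a21)). split. unfold vec3; simpl. pose proof (pow2_ge_0 a22). pose proof (pow2_ge_0 a21). nra.
           check_kernel; fold a00 a01 a02 a10 a11 a12 a20 a21 a22; rewrite ?R0a, ?R0b, ?R0c, ?R1a, ?R1b, ?R1c; lra.
    + destruct (Req_dec (a12 ^ 2 + a11 ^ 2) 0) as [S1|S1].
      * exists (vec3 (- a12) 0 a10). split.
        -- unfold vec3; simpl. nra.
        -- check_kernel; fold a00 a01 a02 a10 a11 a12 a20 a21 a22; rewrite ?R0a, ?R0b, ?R0c; nra.
      * exists (vec3 0 a12 (- a11)). split. unfold vec3; simpl. pose proof (pow2_ge_0 a12). pose proof (pow2_ge_0 a11). nra.
        check_kernel; fold a00 a01 a02 a10 a11 a12 a20 a21 a22; rewrite ?R0a, ?R0b, ?R0c; lra.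
  - destruct (Req_dec (a02 ^ 2 + a01 ^ 2) 0) as [S0|S0].
    + exists (vec3 (- a02) 0 a00). split.
      * unfold vec3; simpl. nra.
      * check_kernel; fold a00 a01 a02 a10 a11 a12 a20 a21 a22; nra.
    + exists (vec3 0 a02 (- a01)). split. unfold vec3; simpl. pose proof (pow2_ge_0 a02). pose proof (pow2_ge_0 a01). nra.
      check_kernel; fold a00 a01 a02 a10 a11 a12 a20 a21 a22; lra.
Qed.

(* A singular 3x3 matrix has a nonzero kernel vector: a nonzero cross product
   of two rows if there is one, otherwise use [null3_parallel_rows]. *)
Lemma null3 (M : Mat) : det3 M = 0 -> exists v : Pt,
  0 < sq3 v /\ forall a, (a < 3)%nat -> sumR 3 (fun b => M a b * v b) = 0.
Proof.
  intros Hdet. unfold det3 in Hdet.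
  destruct (sq3_cases (cross3 (row M 0) (row M 1))) as [Z1|P1].
  2:{ exists (cross3 (row M 0) (row M 1)). split; auto.
      check_kernel; cbv [cross3 vec3 row]; simpl; lra. }
  destruct (sq3_cases (cross3 (row M 0) (row M 2))) as [Z2|P2].
  2:{ exists (cross3 (row M 0) (row M 2)). split; auto.
      check_kernel; cbv [cross3 vec3 row]; simpl; lra. }
  destruct (sq3_cases (cross3 (row M 1) (row M 2))) as [Z3|P3].
  2:{ exists (cross3 (row M 1) (row M 2)). split; auto.
      check_kernel; cbv [cross3 vec3 row]; simpl; lra. }
  apply null3_parallel_rows; auto.
Qed.

Lemma unit_eig3 (S : Mat) : exists (lam : R) (u : Pt),
  sq3 u = 1 /\ forall a, (a < 3)%nat -> sumR 3 (fun b => S a b * u b) = lam * u a.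
Proof.
  destruct (cubic_root (S 0%nat 0%nat + S 1%nat 1%nat + S 2%nat 2%nat)
    (S 0%nat 1%nat * S 1%nat 0%nat + S 0%nat 2%nat * S 2%nat 0%nat + S 1%nat 2%nat * S 2%nat 1%nat
     - S 0%nat 0%nat * S 1%nat 1%nat - S 0%nat 0%nat * S 2%nat 2%nat - S 1%nat 1%nat * S 2%nat 2%nat)
    (det3 S)) as [t Ht].
  set (M := fun i j => S i j - t * kron i j).
  assert (Hd : det3 M = 0) by (rewrite <- Ht; unfold M, det3, kron; simpl; ring).
  destruct (null3 M Hd) as [v [Hv Hk]]. unfold sq3 in *.
  set (n := sqrt (v 0%nat ^ 2 + v 1%nat ^ 2 + v 2%nat ^ 2)).
  assert (Hn : n * n = v 0%nat ^ 2 + v 1%nat ^ 2 + v 2%nat ^ 2) by (apply sqrt_sqrt; lra).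
  assert (Hnp : 0 < n) by (apply sqrt_lt_R0; lra).
  exists t, (fun i => v i / n). split.
  - field_simplify; [|lra]. rewrite <- Hn. field. lra.
  - intros a Ha. pose proof (Hk a Ha) as E. unfold M in E.
    destruct a as [|[|[|a]]]; try lia; simpl in *; unfold kron in E; simpl in E;
    apply (Rmult_eq_reg_l n); try lra; field_simplify; try lra; lra.
Qed.

Definition dotd (d : nat) (x y : Pt) : R := sumR d (fun b => x b * y b).
Definition mv (d : nat) (S : Mat) (x : Pt) : Pt := fun a => sumR d (fun b => S a b * x b).

Lemma dotd_comm d x y : dotd d x y = dotd d y x.
Proof. unfold dotd. apply sumR_ext; intros; ring. Qed.

Lemma dotd_lin_r d x y z p q : dotd d x (fun a => p * y a + q * z a) = p * dotd d x y + q * dotd d x z.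
Proof. unfold dotd. rewrite <- !sumR_scal, <- sumR_plus. apply sumR_ext; intros; ring. Qed.

Lemma dotd_lin_l d x y z p q : dotd d (fun a => p * y a + q * z a) x = p * dotd d y x + q * dotd d z x.
Proof. rewrite dotd_comm, dotd_lin_r, (dotd_comm d x y), (dotd_comm d x z). auto. Qed.

Lemma mv_lin d S x y p q a : mv d S (fun b => p * x b + q * y b) a = p * mv d S x a + q * mv d S y a.
Proof. unfold mv. rewrite <- !sumR_scal, <- sumR_plus. apply sumR_ext; intros; ring. Qed.

Lemma expand d U x : orthoC d U -> forall a, (a < d)%nat ->
  x a = sumR d (fun k => dotd d x (U k) * U k a).
Proof.
  intros HU a Ha. unfold dotd.
  rewrite (sumR_ext d _ (fun k => sumR d (fun b => x b * U k b * U k a))).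
  2:{ intros; rewrite sumR_scalr; auto. }
  rewrite sumR_swap.
  rewrite (sumR_ext d _ (fun b => kron a b * x b)).
  rewrite sumR_kron_r; auto.
  intros b Hb. rewrite kron_sym, <- HU by auto. rewrite <- sumR_scalr. apply sumR_ext; intros; ring.
Qed.

Lemma sym_dot d S x y : symmetric d S -> dotd d (mv d S x) y = dotd d x (mv d S y).
Proof.
  intros HS. unfold dotd, mv.
  rewrite (sumR_ext d _ (fun a => sumR d (fun b => S a b * x b * y a))).
  2:{ intros; rewrite sumR_scalr; auto. }
  rewrite sumR_swap. apply sumR_ext; intros b Hb. rewrite <- sumR_scal. apply sumR_ext; intros a Ha.
  rewrite (HS a b) by auto. ring.
Qed.

(* A unit vector of R^3 extends to an orthonormal basis (u, w, u x w). *)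
Lemma complete3 (u : Pt) : sq3 u = 1 ->
  exists w z : Pt, dotd 3 u w = 0 /\ dotd 3 w w = 1 /\ dotd 3 u z = 0 /\ dotd 3 w z = 0 /\ dotd 3 z z = 1.
Proof.
  intros Hu. unfold sq3 in Hu.
  assert (Hw : exists w : Pt, dotd 3 u w = 0 /\ dotd 3 w w = 1).
  { destruct (Req_dec (u 0%nat ^ 2 + u 1%nat ^ 2) 0) as [Z|P].
    - assert (Z0 : u 0%nat = 0) by nra.
      exists (vec3 1 0 0). unfold dotd, vec3; simpl. rewrite Z0. split; lra.
    - assert (P' : 0 < u 0%nat ^ 2 + u 1%nat ^ 2) by (pose proof (pow2_ge_0 (u 0%nat)); pose proof (pow2_ge_0 (u 1%nat)); lra).
      set (n := sqrt (u 0%nat ^ 2 + u 1%nat ^ 2)).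
      assert (Hn : n * n = u 0%nat ^ 2 + u 1%nat ^ 2) by (apply sqrt_sqrt; lra).
      assert (Hnp : 0 < n) by (apply sqrt_lt_R0; lra).
      exists (vec3 (u 1%nat / n) (- u 0%nat / n) 0). unfold dotd, vec3; simpl. split.
      + field. lra.
      + apply (Rmult_eq_reg_l (n * n)); [|nra]. field_simplify; try lra. }
  destruct Hw as [w [Huw Hww]].
  exists w, (cross3 u w). unfold dotd in Huw, Hww. cbn [sumR] in Huw, Hww. unfold dotd, cross3, vec3. cbn [sumR].
  repeat split; try lra; try ring.
  transitivity ((u 0%nat ^ 2 + u 1%nat ^ 2 + u 2%nat ^ 2) * (0 + w 0%nat * w 0%nat + w 1%nat * w 1%nat + w 2%nat * w 2%nat)
         - (0 + u 0%nat * w 0%nat + u 1%nat * w 1%nat + u 2%nat * w 2%nat) ^ 2). ring.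
  rewrite Hu, Hww, Huw. ring.
Qed.

Definition orthonormal3 (u w z : Pt) : Prop :=
  dotd 3 u u = 1 /\ dotd 3 u w = 0 /\ dotd 3 w w = 1 /\ dotd 3 u z = 0 /\ dotd 3 w z = 0 /\ dotd 3 z z = 1.

Lemma orth_plane_invariant S lam u w z : symmetric 3 S -> orthonormal3 u w z ->
  (forall a, (a < 3)%nat -> mv 3 S u a = lam * u a) ->
  forall a, (a < 3)%nat ->
    mv 3 S w a = dotd 3 (mv 3 S w) w * w a + dotd 3 (mv 3 S w) z * z a /\
    mv 3 S z a = dotd 3 (mv 3 S w) z * w a + dotd 3 (mv 3 S z) z * z a.
Proof.
  intros HS (Huu & Huw & Hww & Huz & Hwz & Hzz) HSu a Ha.
  set (U := fun k => match k with O => u | S O => w | _ => z end).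
  assert (HUr : orthoR 3 U).
  { intros i j Hi Hj. change (sumR 3 (fun a => U i a * U j a)) with (dotd 3 (U i) (U j)).
    destruct i as [|[|[|i]]]; try lia; destruct j as [|[|[|j]]]; try lia; unfold kron; cbn [U Nat.eqb];
    rewrite ?(dotd_comm 3 w u), ?(dotd_comm 3 z u), ?(dotd_comm 3 z w); auto. }
  assert (Hexp : forall x, x a = dotd 3 x u * u a + dotd 3 x w * w a + dotd 3 x z * z a).
  { intros x. rewrite (expand 3 U x (orthoR_C 3 U (or_intror eq_refl) HUr) a Ha) at 1. cbn [sumR U]. ring. }
  assert (Hdu : forall x, dotd 3 (mv 3 S x) u = lam * dotd 3 x u).
  { intros x. rewrite sym_dot by auto. unfold dotd. rewrite <- sumR_scal. apply sumR_ext; intros.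
    rewrite HSu by auto. ring. }
  assert (Hzw : dotd 3 (mv 3 S z) w = dotd 3 (mv 3 S w) z) by (rewrite sym_dot by auto; apply dotd_comm).
  split.
  - rewrite (Hexp (mv 3 S w)). rewrite Hdu, (dotd_comm 3 w u), Huw. ring.
  - rewrite (Hexp (mv 3 S z)). rewrite Hdu, (dotd_comm 3 z u), Huz, Hzw. ring.
Qed.

Lemma spec3 S : symmetric 3 S -> exists O D, spec_decomp 3 S O D.
Proof.
  intros HS.
  destruct (unit_eig3 S) as [lam [u [Hu Heu]]].
  destruct (complete3 u Hu) as [w [z [Huw [Hww [Huz [Hwz Hzz]]]]]].
  assert (Huu : dotd 3 u u = 1) by (unfold dotd, sq3 in *; cbn [sumR]; lra).
  assert (Hon : orthonormal3 u w z) by (repeat split; auto).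
  pose proof (orth_plane_invariant S lam u w z HS Hon Heu) as Hinv.
  set (al := dotd 3 (mv 3 S w) w) in Hinv. set (be := dotd 3 (mv 3 S w) z) in Hinv.
  set (ga := dotd 3 (mv 3 S z) z) in Hinv.
  (* diagonalise S on span(w, z) by a rotation *)
  destruct (rot2 al be ga) as (c & s & m1 & m2 & R1 & R2 & R3 & R4 & R5).
  exists (fun k a => match k with O => u a | S O => c * w a + s * z a | _ => - s * w a + c * z a end).
  exists (fun k => match k with O => lam | S O => m1 | _ => m2 end).
  apply eig_to_spec; auto.
  - intros i j Hi Hj.
    assert (Hdot : forall f g, sumR 3 (fun a => f a * g a) = dotd 3 f g) by reflexivity.
    destruct i as [|[|[|i]]]; try lia; destruct j as [|[|[|j]]]; try lia; unfold kron; cbn [Nat.eqb]; rewrite Hdot;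
    rewrite ?dotd_lin_l, ?dotd_lin_r, ?(dotd_comm 3 w u), ?(dotd_comm 3 z u), ?(dotd_comm 3 z w);
    rewrite ?Huu, ?Huw, ?Huz, ?Hww, ?Hwz, ?Hzz; nra.
  - intros k a Hk Ha.
    assert (Hmv : forall f, sumR 3 (fun b => S a b * f b) = mv 3 S f a) by reflexivity.
    rewrite Hmv. destruct (Hinv a Ha) as [HSw HSz].
    destruct k as [|[|[|k]]]; try lia.
    + apply Heu; auto.
    + rewrite mv_lin, HSw, HSz.
      transitivity ((al * c + be * s) * w a + (be * c + ga * s) * z a). ring.
      rewrite R2, R3. ring.
    + rewrite mv_lin, HSw, HSz.
      transitivity ((al * (- s) + be * c) * w a + (be * (- s) + ga * c) * z a). ring.
      rewrite R4, R5. ring.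
Qed.

Lemma spec_exists d S : (d = 2 \/ d = 3)%nat -> symmetric d S -> exists O D, spec_decomp d S O D.
Proof. intros [-> | ->]; [apply spec2 | apply spec3]. Qed.

Definition admissible (reg : option R) : Prop := forall L, reg = Some L -> 2 <= L.

Lemma Bfun_lip reg u v : Rabs (Bfun reg u - Bfun reg v) <= Rabs (u - v).
Proof.
  destruct reg as [L|]; simpl; [|lra].
  unfold Rmin. destruct (Rle_dec u L), (Rle_dec v L); unfold Rabs;
  repeat destruct Rcase_abs; lra.
Qed.

Lemma Bfun_pos reg s : admissible reg -> 0 < s -> 0 < Bfun reg s.
Proof.
  intros Hr Hs. destruct reg as [L|]; simpl; auto.
  specialize (Hr L eq_refl). unfold Rmin; destruct Rle_dec; lra.
Qed.

Lemma deriv_eq f s l : derivable_pt_lim f s l -> deriv f s = l.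
Proof.
  intros H. unfold deriv. destruct excluded_middle_informative as [h|h].
  - destruct (constructive_indefinite_description _ h) as [l' Hl']. simpl.
    eapply uniqueness_limite; eauto.
  - exfalso. apply h. eauto.
Qed.

Lemma lin_deriv (a b s : R) : derivable_pt_lim (fun z => z * a + b) s a.
Proof.
  intros eps Heps. exists (mkposreal 1 Rlt_0_1). intros h Hh _.
  replace (((s + h) * a + b - (s * a + b)) / h - a) with 0 by (field; auto).
  rewrite Rabs_R0; auto.
Qed.

(* G^L is C^1 across the junction s = L, where both pieces have slope 1/L. *)
Lemma Gpfun_val reg s : admissible reg -> 0 < s -> Gpfun reg s = / Bfun reg s.
Proof.
  intros Hr Hs. unfold Gpfun. apply deriv_eq.
  destruct reg as [L|]; simpl.
  2:{ apply derivable_pt_lim_ln; auto. }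
  specialize (Hr L eq_refl). unfold Gfun.
  destruct (Rtotal_order s L) as [Hlt|[Heq|Hgt]].
  - rewrite (Rmin_left s L) by lra.
    apply (derivable_pt_lim_locally_ext ln _ s (s - 1) L); [lra| |apply derivable_pt_lim_ln; auto].
    intros z Hz. cbv beta. destruct (Rle_dec z L); lra.
  - subst s. rewrite (Rmin_left L L) by lra.
    intros eps Heps. destruct (derivable_pt_lim_ln L Hs eps Heps) as [del Hdel].
    assert (Hdp : 0 < Rmin del (L / 2)) by (apply Rmin_pos; [apply cond_pos|lra]).
    exists (mkposreal _ Hdp). simpl. intros h Hh Hhd.
    pose proof (Rmin_l del (L / 2)). pose proof (Rmin_r del (L / 2)).
    destruct (Rle_dec L L); [|lra].
    destruct (Rle_dec (L + h) L).
    + apply Hdel; auto. lra.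
    + replace (((L + h) / L + ln L - 1 - ln L) / h - / L) with 0 by (field; split; lra).
      rewrite Rabs_R0; auto.
  - rewrite (Rmin_right s L) by lra.
    apply (derivable_pt_lim_locally_ext (fun z => z * / L + (ln L - 1)) _ s L (s + 1)); [lra| |apply lin_deriv].
    intros z Hz. cbv beta. destruct (Rle_dec z L); [lra|]. unfold Rdiv; ring.
Qed.

Lemma Hfun_val reg s : admissible reg -> 0 < s -> Hfun reg (/ Bfun reg s) = - ln (Bfun reg s).
Proof.
  intros Hr Hs. pose proof (Bfun_pos reg s Hr Hs) as Hb.
  destruct reg as [L|]; simpl in *.
  - specialize (Hr L eq_refl). destruct Rle_dec as [|n].
    + apply ln_Rinv; auto.
    + exfalso. apply n. apply Rinv_le_contravar; auto. apply Rmin_r.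
  - apply ln_Rinv; auto.
Qed.

Lemma ln_bregman x y : 0 < x -> 0 < y -> 0 <= ln y - ln x - 1 + x / y.
Proof.
  intros Hx Hy. assert (Hxy : 0 < x / y) by (apply Rdiv_lt_0_compat; auto).
  pose proof (exp_ineq1_le (ln (x / y))) as H. rewrite exp_ln in H by auto.
  unfold Rdiv in *. rewrite ln_mult, ln_Rinv in H by (auto; apply Rinv_0_lt_compat; auto). lra.
Qed.

(* The Bregman divergence of -ln det is nonnegative:
   ln det Y - ln det X - X : (X^{-1} - Y^{-1}) >= 0 for X, Y positive definite. *)
Lemma logdet_bregman d X Xi Y Yi O p Q q : (d = 2 \/ d = 3)%nat ->
  spec_decomp d X O p -> spec_decomp d Xi O (fun k => / p k) ->
  spec_decomp d Y Q q -> spec_decomp d Yi Q (fun k => / q k) ->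
  (forall k, (k < d)%nat -> 0 < p k) -> (forall k, (k < d)%nat -> 0 < q k) ->
  0 <= sumR d (fun k => ln (q k)) - sumR d (fun k => ln (p k)) - frob d X (msub Xi Yi).
Proof.
  intros Hd HX HXi HY HYi Hp Hq.
  pose proof HX as [HOc HXe]. pose proof HY as [HQc _]. pose proof HYi as [_ HYie].
  pose proof (orthoC_R d O Hd HOc) as HOr. pose proof (orthoC_R d Q Hd HQc) as HQr.
  set (W := overlap d O Q).
  assert (FXXi : frob d X Xi = sumR d (fun i => sumR d (fun k => W i k ^ 2))).
  { rewrite (frob_same_basis d X Xi O p _ Hd HX HXi). apply sumR_ext; intros i Hi.
    unfold W. rewrite overlap_row by auto. specialize (Hp i Hi). field. lra. }
  assert (Slnp : sumR d (fun k => ln (p k)) = sumR d (fun i => sumR d (fun k => ln (p i) * W i k ^ 2))).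
  { apply sumR_ext; intros i Hi. rewrite sumR_scal. unfold W. rewrite overlap_row; auto. ring. }
  assert (Slnq : sumR d (fun k => ln (q k)) = sumR d (fun i => sumR d (fun k => ln (q k) * W i k ^ 2))).
  { rewrite sumR_swap. apply sumR_ext; intros k Hk. rewrite sumR_scal. unfold W. rewrite overlap_col; auto. ring. }
  rewrite frob_sub_r, FXXi, (frob_decomp d X Yi O p Q _ HXe HYie), Slnp, Slnq.
  rewrite <- !sumR_minus. apply sumR_nonneg; intros i Hi.
  rewrite <- !sumR_minus. apply sumR_nonneg; intros k Hk.
  unfold W. set (w := overlap d O Q i k).
  replace (ln (q k) * w ^ 2 - ln (p i) * w ^ 2 - (w ^ 2 - p i * / q k * w ^ 2))
    with (w ^ 2 * (ln (q k) - ln (p i) - 1 + p i / q k)) by (unfold Rdiv; ring).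
  apply Rmult_le_pos. apply pow2_ge_0. apply ln_bregman; auto.
Qed.

Lemma entropy_vars d reg A : (d = 2 \/ d = 3)%nat -> admissible reg -> posdef d A ->
  exists O p, (forall k, (k < d)%nat -> 0 < p k) /\
    spec_decomp d (mfun d (Bfun reg) A) O p /\
    spec_decomp d (mfun d (Gpfun reg) A) O (fun k => / p k) /\
    mtr d (mfun d (Hfun reg) (mfun d (Gpfun reg) A)) = - sumR d (fun k => ln (p k)).
Proof.
  intros Hd Hr HA.
  destruct (spec_exists d A Hd (proj1 HA)) as [O [D HS]].
  pose proof (posdef_eig d A O D Hd HS HA) as HDp.
  exists O, (fun k => Bfun reg (D k)).
  assert (HGp : spec_decomp d (mfun d (Gpfun reg) A) O (fun k => / Bfun reg (D k))).
  { apply (spec_ext d _ O (fun k => Gpfun reg (D k))). apply mfun_spec; auto.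
    intros. apply Gpfun_val; auto. }
  split; [|split; [|split]].
  - intros k Hk. apply Bfun_pos; auto.
  - apply mfun_spec; auto.
  - exact HGp.
  - rewrite (mtr_decomp d _ O (fun k => Hfun reg (/ Bfun reg (D k)))) by (auto; apply mfun_spec; auto).
    replace (- sumR d (fun k => ln (Bfun reg (D k)))) with (-1 * sumR d (fun k => ln (Bfun reg (D k)))) by ring.
    rewrite <- sumR_scal. apply sumR_ext; intros. rewrite Hfun_val; auto. ring.
Qed.

(* hat-Lambda_j is a convex combination of beta(phi(P_j)) and beta(phi(P_0)):
   its weight is num/den with 0 <= num <= den, both inequalities being
   instances of [logdet_bregman]. *)
Lemma Lhat_conv d reg A j : (d = 2 \/ d = 3)%nat -> admissible reg ->
  (forall i, (i <= d)%nat -> posdef d (A i)) -> (j < d)%nat ->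
  exists lam, 0 <= lam <= 1 /\ forall a b,
    Lhat d reg A (S j) a b = (1 - lam) * mfun d (Bfun reg) (A (S j)) a b + lam * mfun d (Bfun reg) (A 0%nat) a b.
Proof.
  intros Hd Hr HA Hj.
  destruct (entropy_vars d reg (A (S j)) Hd Hr (HA (S j) ltac:(lia))) as (O & p & Hp & HX & HXi & HtX).
  destruct (entropy_vars d reg (A 0%nat) Hd Hr (HA 0%nat ltac:(lia))) as (Q & q & Hq & HY & HYi & HtY).
  set (X := mfun d (Bfun reg) (A (S j))) in *. set (Y := mfun d (Bfun reg) (A 0%nat)) in *.
  set (Xi := mfun d (Gpfun reg) (A (S j))) in *. set (Yi := mfun d (Gpfun reg) (A 0%nat)) in *.
  set (num := mtr d (mfun d (Hfun reg) Xi) - mtr d (mfun d (Hfun reg) Yi) - frob d X (msub Xi Yi)).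
  set (den := frob d (msub Y X) (msub Xi Yi)).
  assert (Nn : 0 <= num).
  { unfold num. rewrite HtX, HtY.
    pose proof (logdet_bregman d X Xi Y Yi O p Q q Hd HX HXi HY HYi Hp Hq). lra. }
  assert (Dn : 0 <= den - num).
  { unfold den, num. rewrite HtX, HtY.
    pose proof (logdet_bregman d Y Yi X Xi Q q O p Hd HY HYi HX HXi Hq Hp) as HB.
    rewrite frob_sub_l. rewrite !frob_sub_r in *. lra. }
  unfold Lhat. cbv zeta. fold X Y Xi Yi.
  destruct (Req_EM_T (frob d (msub X Y) (msub Xi Yi)) 0) as [Z|NZ].
  - exists 0. split. lra. intros. ring.
  - assert (Hden : den = - frob d (msub X Y) (msub Xi Yi)) by (unfold den; rewrite !frob_sub_l; ring).
    assert (Hdp : 0 < den) by (destruct (Req_dec den 0); [exfalso; apply NZ; lra | lra]).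
    fold num den. exists (num / den). split.
    + split. unfold Rdiv; apply Rmult_le_pos; [lra| apply Rlt_le, Rinv_0_lt_compat; lra].
      apply (Rmult_le_reg_r den); auto. unfold Rdiv. rewrite Rmult_assoc, Rinv_l by lra. lra.
    + intros a b. unfold madd, mscale. ring.
Qed.

Lemma weight_le1 d (lam : nat -> R) j : (forall j, (j <= d)%nat -> 0 <= lam j) -> sumR (S d) lam = 1 ->
  (j <= d)%nat -> 0 <= lam j <= 1.
Proof. intros H1 H2 Hj. split. auto. rewrite <- H2. apply sumR_term_le; [intros; apply H1; lia | lia]. Qed.

Lemma aff_comb d (lam : nat -> R) (F : nat -> R) : sumR (S d) lam = 1 ->
  sumR (S d) (fun j => lam j * F j) = F O + sumR d (fun j => lam (S j) * (F (S j) - F O)).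
Proof.
  intros H. rewrite sumR_shift in *.
  assert (lam O = 1 - sumR d (fun i => lam (S i))) by lra. rewrite H0.
  rewrite (sumR_ext d (fun j => lam (S j) * (F (S j) - F O)) (fun j => lam (S j) * F (S j) - F O * lam (S j))) by (intros; ring).
  rewrite sumR_minus, sumR_scal. ring.
Qed.

Definition axis_point (c : Pt) (s r : R) (m : nat) : Pt := fun q => c q + s * r * kron q m.

Lemma axis_point_in_ball d c s r m : s ^ 2 = 1 -> sumR d (fun p => (axis_point c s r m p - c p) ^ 2) <= r ^ 2.
Proof.
  intros Hs. unfold axis_point.
  rewrite (sumR_ext d _ (fun p => r ^ 2 * kron p m)).
  2:{ intros. unfold kron. destruct (Nat.eqb i m); simpl; nra. }
  destruct (Nat.lt_ge_cases m d).
  - rewrite (sumR_kron_pt d m (fun _ => r ^ 2)); auto; lra.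
  - rewrite (sumR_kron_out d m (fun _ => r ^ 2)); auto. pose proof (pow2_ge_0 r); lra.
Qed.

Lemma inK_diff d P (l1 l2 : nat -> R) (y1 y2 : Pt) :
  sumR (S d) l1 = 1 -> sumR (S d) l2 = 1 ->
  (forall p, (p < d)%nat -> y1 p = sumR (S d) (fun j => l1 j * P j p)) ->
  (forall p, (p < d)%nat -> y2 p = sumR (S d) (fun j => l2 j * P j p)) ->
  forall p, (p < d)%nat -> y1 p - y2 p = sumR d (fun j => (l1 (S j) - l2 (S j)) * BT P j p).
Proof.
  intros H1 H2 E1 E2 p Hp. rewrite E1, E2 by auto.
  rewrite (aff_comb d l1 (fun j => P j p) H1), (aff_comb d l2 (fun j => P j p) H2).
  assert (E : sumR d (fun j => (l1 (S j) - l2 (S j)) * BT P j p) =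
     sumR d (fun j => l1 (S j) * (P (S j) p - P O p)) - sumR d (fun j => l2 (S j) * (P (S j) p - P O p))).
  { rewrite <- sumR_minus. apply sumR_ext; intros; unfold BT; ring. }
  rewrite E. ring.
Qed.

(* If K contains the ball B(c, r), then B_K^T has a left inverse with entries
   bounded by 1/(2r): row m is the difference of the barycentric coordinates
   of c + r e_m and c - r e_m, divided by 2r. *)
Lemma left_inv_exists d P r c : 0 < r ->
  (forall y : Pt, sumR d (fun p => (y p - c p) ^ 2) <= r ^ 2 -> inK d P y) ->
  exists N : Mat, (forall m p, (m < d)%nat -> (p < d)%nat -> sumR d (fun k => N m k * BT P k p) = kron m p) /\
    (forall m j, Rabs (N m j) <= / (2 * r)).
Proof.
  intros Hr Hb.
  assert (Hp : forall m, inK d P (axis_point c 1 r m)) by (intros; apply Hb; apply axis_point_in_ball; ring).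
  assert (Hm : forall m, inK d P (axis_point c (-1) r m)) by (intros; apply Hb; apply axis_point_in_ball; ring).
  set (lp := fun m => proj1_sig (constructive_indefinite_description _ (Hp m))).
  set (lm := fun m => proj1_sig (constructive_indefinite_description _ (Hm m))).
  assert (Lp : forall m, (forall j, (j <= d)%nat -> 0 <= lp m j) /\ sumR (S d) (lp m) = 1 /\
     forall p, (p < d)%nat -> axis_point c 1 r m p = sumR (S d) (fun j => lp m j * P j p)).
  { intros m. unfold lp. destruct (constructive_indefinite_description _ (Hp m)). simpl. auto. }
  assert (Lm : forall m, (forall j, (j <= d)%nat -> 0 <= lm m j) /\ sumR (S d) (lm m) = 1 /\
     forall p, (p < d)%nat -> axis_point c (-1) r m p = sumR (S d) (fun j => lm m j * P j p)).
  { intros m. unfold lm. destruct (constructive_indefinite_description _ (Hm m)). simpl. auto. }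
  exists (fun m j => if Compare_dec.le_lt_dec d j then 0 else (lp m (S j) - lm m (S j)) / (2 * r)).
  split.
  - intros m p Hm' Hp'.
    destruct (Lp m) as (Lp1 & Lp2 & Lp3). destruct (Lm m) as (Lm1 & Lm2 & Lm3).
    pose proof (inK_diff d P _ _ _ _ Lp2 Lm2 Lp3 Lm3 p Hp') as E.
    unfold axis_point in E.
    rewrite (sumR_ext d _ (fun k => (lp m (S k) - lm m (S k)) * BT P k p / (2 * r))).
    2:{ intros k Hk. destruct (Compare_dec.le_lt_dec d k); [lia|]. field. lra. }
    unfold Rdiv. rewrite sumR_scalr. rewrite <- E. rewrite kron_sym. field. lra.
  - intros m j. destruct (Compare_dec.le_lt_dec d j). rewrite Rabs_R0. left. apply Rinv_0_lt_compat. lra.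
    destruct (Lp m) as (Lp1 & Lp2 & _). destruct (Lm m) as (Lm1 & Lm2 & _).
    pose proof (weight_le1 d (lp m) (S j) Lp1 Lp2 ltac:(lia)).
    pose proof (weight_le1 d (lm m) (S j) Lm1 Lm2 ltac:(lia)).
    unfold Rdiv. rewrite Rabs_mult. rewrite (Rabs_right (/ (2 * r))).
    2:{ left. apply Rinv_0_lt_compat. lra. }
    replace (/ (2 * r)) with (1 * / (2 * r)) at 2 by ring.
    apply Rmult_le_compat_r. left. apply Rinv_0_lt_compat. lra.
    unfold Rabs. destruct Rcase_abs; lra.
Qed.

Definition LeftInv d P := forall m p, (m < d)%nat -> (p < d)%nat ->
  sumR d (fun k => BTinv d P m k * BT P k p) = kron m p.
Definition RightInv d P := forall i j, (i < d)%nat -> (j < d)%nat ->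
  sumR d (fun k => BT P i k * BTinv d P k j) = kron i j.

Lemma BTinv_props d P r c : (d = 2 \/ d = 3)%nat -> 0 < r ->
  (forall y : Pt, sumR d (fun p => (y p - c p) ^ 2) <= r ^ 2 -> inK d P y) ->
  LeftInv d P /\ RightInv d P /\ (forall m j, (m < d)%nat -> (j < d)%nat -> Rabs (BTinv d P m j) <= / (2 * r)).
Proof.
  intros Hd Hr Hb. destruct (left_inv_exists d P r c Hr Hb) as [N [HN1 HN2]].
  pose proof (inv_comm d N (BT P) Hd HN1) as HN3.
  (* any left inverse N' of B_K^T equals N, since N is also a right inverse *)
  assert (E : forall m j, (m < d)%nat -> (j < d)%nat -> BTinv d P m j = N m j).
  { intros m j Hm Hj. unfold BTinv. destruct excluded_middle_informative as [h0|h0].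
    - destruct (constructive_indefinite_description _ h0) as [N' HN']. simpl.
      transitivity (sumR d (fun k => N' m k * kron k j)).
      { rewrite sumR_kron_pt; auto. }
      transitivity (sumR d (fun k => N' m k * sumR d (fun p => BT P k p * N p j))).
      { apply sumR_ext; intros. rewrite HN3; auto. }
      transitivity (sumR d (fun p => sumR d (fun k => N' m k * BT P k p) * N p j)).
      { rewrite (sumR_ext d _ (fun k => sumR d (fun p => N' m k * BT P k p * N p j))).
        2:{ intros. rewrite <- sumR_scal. apply sumR_ext; intros; ring. }
        rewrite sumR_swap. apply sumR_ext; intros. rewrite sumR_scalr. auto. }
      rewrite (sumR_ext d _ (fun p => kron m p * N p j)).
      apply (sumR_kron_r d m (fun p => N p j)); auto. intros. rewrite HN'; auto.
    - exfalso. apply h0. exists N. auto. }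
  split; [|split].
  - intros m p Hm Hp. rewrite <- (HN1 m p) by auto. apply sumR_ext; intros k Hk. rewrite (E m k); auto.
  - intros i j Hi Hj. rewrite <- (HN3 i j) by auto. apply sumR_ext; intros k Hk. rewrite (E k j); auto.
  - intros m j Hm Hj. rewrite E; auto.
Qed.

Definition bary d P x (k : nat) : R :=
  match k with O => 1 - sumR d (mu d P x) | S j => mu d P x j end.

Lemma bary_sum d P x : sumR (S d) (bary d P x) = 1.
Proof. rewrite sumR_shift. simpl. change (sumR d (fun i => mu d P x i)) with (sumR d (mu d P x)). ring. Qed.

Lemma mu_of_inK d P x (lam : nat -> R) : RightInv d P -> sumR (S d) lam = 1 ->
  (forall p, (p < d)%nat -> x p = sumR (S d) (fun j => lam j * P j p)) ->
  forall j, (j < d)%nat -> mu d P x j = lam (S j).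
Proof.
  intros HR Hs Hx j Hj. unfold mu.
  rewrite (sumR_ext d _ (fun p => BTinv d P p j * sumR d (fun k => lam (S k) * BT P k p))).
  2:{ intros p Hp. rewrite Hx by auto. rewrite (aff_comb d lam (fun j => P j p) Hs). unfold BT.
      f_equal. ring. }
  rewrite (sumR_ext d _ (fun p => sumR d (fun k => lam (S k) * (BT P k p * BTinv d P p j)))).
  2:{ intros. rewrite <- sumR_scal. apply sumR_ext; intros; ring. }
  rewrite sumR_swap.
  rewrite (sumR_ext d _ (fun k => kron j k * lam (S k))).
  apply (sumR_kron_r d j (fun k => lam (S k))); auto.
  intros k Hk. rewrite sumR_scal. rewrite HR by auto. rewrite kron_sym. ring.
Qed.

Lemma inK_of_mu d P x : LeftInv d P -> (forall j, (j < d)%nat -> 0 <= mu d P x j) ->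
  0 <= 1 - sumR d (mu d P x) -> inK d P x.
Proof.
  intros HL H1 H2. exists (bary d P x). split; [|split].
  - intros [|j] Hj; simpl; [auto | apply H1; lia].
  - apply bary_sum.
  - intros p Hp. rewrite (aff_comb d (bary d P x) (fun j => P j p) (bary_sum d P x)). simpl.
    unfold mu.
    rewrite (sumR_ext d _ (fun j => sumR d (fun q => (x q - P O q) * (BTinv d P q j * BT P j p)))).
    2:{ intros j Hj. unfold BT. rewrite <- sumR_scalr. apply sumR_ext; intros; ring. }
    rewrite sumR_swap.
    rewrite (sumR_ext d _ (fun q => kron p q * (x q - P O q))).
    2:{ intros q Hq. rewrite sumR_scal. rewrite HL by auto. rewrite kron_sym; ring. }
    rewrite (sumR_kron_r d p (fun q => x q - P O q)) by auto. ring.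
Qed.

Lemma bary_nonneg d P x : RightInv d P -> inK d P x -> forall k, (k <= d)%nat -> 0 <= bary d P x k.
Proof.
  intros HR [lam [H1 [H2 H3]]] k Hk.
  assert (Hmu : forall j, (j < d)%nat -> mu d P x j = lam (S j)) by (apply mu_of_inK; auto).
  destruct k as [|j].
  - simpl. rewrite (sumR_ext d _ (fun j => lam (S j))) by auto.
    rewrite sumR_shift in H2. pose proof (H1 O ltac:(lia)). lra.
  - simpl. rewrite Hmu by lia. apply H1. lia.
Qed.

Lemma sum_abs_bary d P x : RightInv d P -> inK d P x ->
  sumR (S d) (fun k => Rabs (bary d P x k)) = 1.
Proof.
  intros HR HK. rewrite <- (bary_sum d P x). apply sumR_ext; intros.
  apply Rabs_right. apply Rle_ge. apply bary_nonneg; auto. lia.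
Qed.

Lemma p1_bary d P (V : nat -> Mat) x a b :
  p1interp d P V x a b = sumR (S d) (fun k => bary d P x k * V k a b).
Proof.
  unfold p1interp, madd. rewrite sumR_shift. simpl.
  rewrite (sumR_ext d (fun j => mu d P x j * (V (S j) a b - V O a b))
                      (fun j => mu d P x j * V (S j) a b - V O a b * mu d P x j)) by (intros; ring).
  rewrite sumR_minus, sumR_scal. change (sumR d (fun j => mu d P x j)) with (sumR d (mu d P x)). ring.
Qed.

Definition dphi d P (A : nat -> Mat) a b q : R :=
  sumR d (fun j => BTinv d P q j * (A (S j) a b - A O a b)).

Lemma upd_kron (x : Pt) q t p : upd x q t p = x p + kron p q * (t - x q).
Proof. unfold upd, kron. destruct (Nat.eqb p q) eqn:E. apply Nat.eqb_eq in E. subst. ring. ring. Qed.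

Lemma mu_upd d P x q t j : (q < d)%nat -> mu d P (upd x q t) j = mu d P x j + BTinv d P q j * (t - x q).
Proof.
  intros Hq. unfold mu.
  rewrite (sumR_ext d _ (fun p => BTinv d P p j * (x p - P O p) + kron p q * (BTinv d P p j * (t - x q)))).
  2:{ intros. rewrite upd_kron. ring. }
  rewrite sumR_plus. f_equal.
  apply (sumR_kron_l d q (fun p => BTinv d P p j * (t - x q))); auto.
Qed.

Lemma phi_upd d P A x q t a b : (q < d)%nat ->
  phiK d P A (upd x q t) a b = phiK d P A x a b + dphi d P A a b q * (t - x q).
Proof.
  intros Hq. unfold phiK, p1interp, madd, dphi.
  rewrite (sumR_ext d _ (fun j => mu d P x j * (A (S j) a b - A O a b) +
     (t - x q) * (BTinv d P q j * (A (S j) a b - A O a b)))).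
  2:{ intros. rewrite mu_upd by auto. ring. }
  rewrite sumR_plus, sumR_scal. ring.
Qed.

Lemma partial_phi d P A x q a b : (q < d)%nat ->
  partial q (fun y => phiK d P A y a b) x = dphi d P A a b q.
Proof.
  intros Hq. unfold partial. apply deriv_eq.
  apply (derivable_pt_lim_ext (fun t => t * dphi d P A a b q + (phiK d P A x a b - dphi d P A a b q * x q))).
  - intros z. rewrite phi_upd by auto. ring.
  - apply lin_deriv.
Qed.

Definition gradnorm2 d P A : R := sumR d (fun a => sumR d (fun b => sumR d (fun q => dphi d P A a b q ^ 2))).

Lemma gradsq_val d P A x : gradsq d (phiK d P A) x = gradnorm2 d P A.
Proof.
  unfold gradsq, gradnorm2. apply sumR_ext; intros. apply sumR_ext; intros. apply sumR_ext; intros.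
  rewrite partial_phi; auto.
Qed.

Lemma gradnorm2_nonneg d P A : 0 <= gradnorm2 d P A.
Proof. unfold gradnorm2. repeat (apply sumR_nonneg; intros). apply pow2_ge_0. Qed.

Lemma vertex_diff0 d P A : RightInv d P -> forall i a b, (i <= d)%nat ->
  A i a b - A O a b = sumR d (fun q => (P i q - P O q) * dphi d P A a b q).
Proof.
  intros HR [|j] a b Hi.
  - rewrite (sumR_ext d _ (fun _ => 0)) by (intros; ring). rewrite sumR_0. ring.
  - unfold dphi.
    rewrite (sumR_ext d _ (fun q => sumR d (fun l => (BT P j q * BTinv d P q l) * (A (S l) a b - A O a b)))).
    2:{ intros. rewrite <- sumR_scal. apply sumR_ext; intros. unfold BT. ring. }
    rewrite sumR_swap.
    rewrite (sumR_ext d _ (fun l => kron j l * (A (S l) a b - A O a b))).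
    2:{ intros. rewrite sumR_scalr. rewrite HR by lia. auto. }
    rewrite (sumR_kron_r d j (fun l => A (S l) a b - A O a b)) by lia. auto.
Qed.

Lemma vertex_diff d P A : RightInv d P -> forall i k a b, (i <= d)%nat -> (k <= d)%nat ->
  A i a b - A k a b = sumR d (fun q => (P i q - P k q) * dphi d P A a b q).
Proof.
  intros HR i k a b Hi Hk.
  replace (A i a b - A k a b) with ((A i a b - A O a b) - (A k a b - A O a b)) by ring.
  rewrite (vertex_diff0 d P A HR i), (vertex_diff0 d P A HR k) by auto. rewrite <- sumR_minus.
  apply sumR_ext; intros; ring.
Qed.

Lemma edist_sq d u v : edist d u v ^ 2 = sumR d (fun p => (u p - v p) ^ 2).
Proof. unfold edist. simpl. rewrite Rmult_1_r. apply sqrt_sqrt. apply sumR_nonneg; intros; apply pow2_ge_0. Qed.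

Lemma edist_nonneg d u v : 0 <= edist d u v.
Proof. unfold edist. apply sqrt_pos. Qed.

Lemma abs_le_edist d u v p : (p < d)%nat -> Rabs (u p - v p) <= edist d u v.
Proof.
  intros Hp. unfold edist. rewrite <- sqrt_Rsqr_abs. apply sqrt_le_1_alt.
  pose proof (sumR_term_le d (fun p => (u p - v p) ^ 2) p) as H.
  cbv beta in H. replace (Rsqr (u p - v p)) with ((u p - v p) ^ 2) by (unfold Rsqr; ring).
  apply H; auto. intros. apply pow2_ge_0.
Qed.

Lemma normsq_vertex_diff d P A : RightInv d P -> forall i k, (i <= d)%nat -> (k <= d)%nat ->
  normsq d (msub (A i) (A k)) <= edist d (P i) (P k) ^ 2 * gradnorm2 d P A.
Proof.
  intros HR i k Hi Hk. unfold normsq, frob, msub, gradnorm2. rewrite <- sumR_scal. apply sumR_le; intros a Ha.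
  rewrite <- sumR_scal. apply sumR_le; intros b Hb.
  rewrite (vertex_diff d P A HR i k a b) by auto. rewrite edist_sq.
  pose proof (sumR_CS d (fun q => P i q - P k q) (fun q => dphi d P A a b q)). simpl in *. nra.
Qed.

Lemma normsq_comb d n (c : nat -> R) (U : nat -> Mat) B : 0 <= B ->
  (forall k, (k < n)%nat -> normsq d (U k) <= B) ->
  normsq d (fun a b => sumR n (fun k => c k * U k a b)) <= (sumR n (fun k => Rabs (c k))) ^ 2 * B.
Proof.
  intros HB HU.
  set (s := sumR n (fun k => Rabs (c k))).
  assert (Hs : 0 <= s) by (apply sumR_nonneg; intros; apply Rabs_pos).
  unfold normsq, frob.
  apply Rle_trans with (sumR d (fun a => sumR d (fun b => s * sumR n (fun k => Rabs (c k) * U k a b ^ 2)))).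
  { apply sumR_le; intros a Ha. apply sumR_le; intros b Hb.
    pose proof (sumR_wCS n c (fun k => U k a b)). simpl in *. fold s in H. nra. }
  apply Rle_trans with (s * sumR n (fun k => Rabs (c k) * normsq d (U k))).
  { right.
    rewrite (sumR_ext d (fun a => sumR d (fun b => s * sumR n (fun k => Rabs (c k) * U k a b ^ 2)))
                        (fun a => s * sumR d (fun b => sumR n (fun k => Rabs (c k) * U k a b ^ 2)))).
    2:{ intros. rewrite sumR_scal. auto. }
    rewrite sumR_scal. f_equal.
    rewrite (sumR_ext d _ (fun a => sumR n (fun k => sumR d (fun b => Rabs (c k) * U k a b ^ 2)))).
    2:{ intros. apply sumR_swap. }
    rewrite sumR_swap. apply sumR_ext; intros k Hk. unfold normsq, frob.
    rewrite <- sumR_scal. apply sumR_ext; intros. rewrite <- sumR_scal. apply sumR_ext; intros. ring. }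
  replace (s ^ 2 * B) with (s * (s * B)) by ring.
  apply Rmult_le_compat_l; auto. unfold s. rewrite <- sumR_scalr. apply sumR_le; intros k Hk.
  apply Rmult_le_compat_l. apply Rabs_pos. auto.
Qed.

Section Pointwise.

Variables (d : nat) (reg : option R) (P : nat -> Pt) (A : nat -> Mat) (h : R).
Hypothesis Hd : (d = 2 \/ d = 3)%nat.
Hypothesis Hreg : admissible reg.
Hypothesis HA : forall i, (i <= d)%nat -> posdef d (A i).
Hypothesis HR : RightInv d P.
Hypothesis Hh : forall i j, (i <= d)%nat -> (j <= d)%nat -> edist d (P i) (P j) <= h.

Let Bphi (x : Pt) : Mat := mfun d (Bfun reg) (phiK d P A x).

Lemma gradbound_nonneg : 0 <= h ^ 2 * gradnorm2 d P A.
Proof. apply Rmult_le_pos. apply pow2_ge_0. apply gradnorm2_nonneg. Qed.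

Lemma vertex_beta_close x : inK d P x -> forall i, (i <= d)%nat ->
  normsq d (msub (mfun d (Bfun reg) (A i)) (Bphi x)) <= h ^ 2 * gradnorm2 d P A.
Proof.
  intros HK i Hi.
  assert (Hsym : symmetric d (phiK d P A x)).
  { intros a b Ha Hb. unfold phiK. rewrite !p1_bary. apply sumR_ext; intros k Hk.
    destruct (HA k ltac:(lia)) as [Hs _]. rewrite Hs; auto. }
  destruct (spec_exists d _ Hd Hsym) as [Ox [Dx HSx]].
  destruct (spec_exists d (A i) Hd (proj1 (HA i Hi))) as [Oi [Di HSi]].
  eapply Rle_trans. apply (mfun_lip d _ _ Oi Di Ox Dx (Bfun reg) Hd HSi HSx). apply Bfun_lip.
  (* phi(P_i) - phi(x) is the barycentric mean of the vertex differences *)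
  rewrite (normsq_ext d _ (fun a b => sumR (S d) (fun k => bary d P x k * msub (A i) (A k) a b))).
  2:{ intros a b Ha Hb. unfold msub. unfold phiK. rewrite p1_bary.
      rewrite (sumR_ext (S d) (fun k => bary d P x k * (A i a b - A k a b))
                 (fun k => A i a b * bary d P x k - bary d P x k * A k a b)) by (intros; ring).
      rewrite sumR_minus, sumR_scal, bary_sum. ring. }
  replace (h ^ 2 * gradnorm2 d P A) with (1 ^ 2 * (h ^ 2 * gradnorm2 d P A)) by ring.
  rewrite <- (sum_abs_bary d P x HR HK) at 1.
  apply normsq_comb. apply gradbound_nonneg.
  intros k Hk. eapply Rle_trans. apply (normsq_vertex_diff d P A HR i k Hi); lia.
  apply Rmult_le_compat_r. apply gradnorm2_nonneg.
  pose proof (Hh i k Hi ltac:(lia)). pose proof (edist_nonneg d (P i) (P k)). nra.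
Qed.

Lemma interp_error_pt x : inK d P x ->
  normsq d (msub (p1interp d P (fun j => mfun d (Bfun reg) (A j)) x) (Bphi x)) <= h ^ 2 * gradnorm2 d P A.
Proof.
  intros HK.
  rewrite (normsq_ext d _ (fun a c => sumR (S d) (fun k => bary d P x k * msub (mfun d (Bfun reg) (A k)) (Bphi x) a c))).
  2:{ intros a c Ha Hc. unfold msub. rewrite p1_bary.
      rewrite (sumR_ext (S d) (fun k => bary d P x k * (mfun d (Bfun reg) (A k) a c - Bphi x a c))
                 (fun k => bary d P x k * mfun d (Bfun reg) (A k) a c - Bphi x a c * bary d P x k)) by (intros; ring).
      rewrite sumR_minus, sumR_scal, bary_sum. ring. }
  replace (h ^ 2 * gradnorm2 d P A) with (1 ^ 2 * (h ^ 2 * gradnorm2 d P A)) by ring.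
  rewrite <- (sum_abs_bary d P x HR HK) at 1.
  apply normsq_comb. apply gradbound_nonneg.
  intros k Hk. apply vertex_beta_close; auto. lia.
Qed.

Lemma Lhat_error_pt x j : inK d P x -> (j < d)%nat ->
  normsq d (msub (Lhat d reg A (S j)) (Bphi x)) <= h ^ 2 * gradnorm2 d P A.
Proof.
  intros HK Hj.
  destruct (Lhat_conv d reg A j Hd Hreg HA Hj) as [lam [Hl E]].
  set (U := fun k : nat => match k with
    | O => msub (mfun d (Bfun reg) (A (S j))) (Bphi x) | _ => msub (mfun d (Bfun reg) (A O)) (Bphi x) end).
  set (c := fun k : nat => match k with O => 1 - lam | _ => lam end).
  rewrite (normsq_ext d _ (fun a e => sumR 2 (fun k => c k * U k a e))).
  2:{ intros a e Ha He. unfold msub. rewrite E. simpl. unfold U, c, msub. ring. }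
  replace (h ^ 2 * gradnorm2 d P A) with ((sumR 2 (fun k => Rabs (c k))) ^ 2 * (h ^ 2 * gradnorm2 d P A)).
  2:{ simpl. unfold c. rewrite !Rabs_right by lra. ring. }
  apply normsq_comb. apply gradbound_nonneg.
  intros [|[|k]] Hk; try lia; simpl; apply vertex_beta_close; auto; lia.
Qed.

(* Lambda_{m,p} - delta_mp beta(phi) = sum_j (B^-T)_mj (B^T)_jp (hat-Lambda_j - beta(phi)). *)
Lemma Lambda_error_pt x m p (K0 : R) : LeftInv d P -> inK d P x -> (m < d)%nat -> (p < d)%nat ->
  sumR d (fun j => Rabs (BTinv d P m j * BT P j p)) <= K0 ->
  normsq d (msub (Lambda d reg P A m p) (mscale (kron m p) (Bphi x)))
  <= K0 ^ 2 * (h ^ 2 * gradnorm2 d P A).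
Proof.
  intros HL HK Hm Hp Hsum.
  rewrite (normsq_ext d _ (fun a e => sumR d (fun j => (BTinv d P m j * BT P j p) * msub (Lhat d reg A (S j)) (Bphi x) a e))).
  2:{ intros a e Ha He. unfold msub, mscale, Lambda.
      rewrite (sumR_ext d (fun j => BTinv d P m j * BT P j p * (Lhat d reg A (S j) a e - Bphi x a e))
                 (fun j => BTinv d P m j * BT P j p * Lhat d reg A (S j) a e - Bphi x a e * (BTinv d P m j * BT P j p)))
        by (intros; ring).
      rewrite sumR_minus, sumR_scal. rewrite HL by auto. ring. }
  eapply Rle_trans. apply (normsq_comb d d _ _ (h ^ 2 * gradnorm2 d P A)).
  - apply gradbound_nonneg.
  - intros j Hj. apply (Lhat_error_pt x j HK Hj).
  - apply Rmult_le_compat_r. apply gradbound_nonneg.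
    assert (0 <= sumR d (fun j => Rabs (BTinv d P m j * BT P j p))) by (apply sumR_nonneg; intros; apply Rabs_pos).
    nra.
Qed.

End Pointwise.

Definition spike (a b va vb : R) : R -> R := fun t =>
  if Req_EM_T t a then va else if Req_EM_T t b then vb else 0.

Lemma spike_step a b va vb : a <= b -> IsStepFun (spike a b va vb) a b.
Proof.
  intros Hab. exists (a :: b :: nil). exists (0 :: nil). repeat split.
  - intros i Hi. simpl in Hi. destruct i; [simpl; auto | lia].
  - simpl. rewrite Rmin_left; auto.
  - simpl. rewrite Rmax_right; auto.
  - intros i Hi. simpl in Hi. destruct i; [|lia]. simpl. intros t [Ht1 Ht2].
    unfold spike. destruct Req_EM_T; [lra|]. destruct Req_EM_T; [lra|]. auto.
Defined.

Lemma spike_int a b va vb (H : a <= b) : RiemannInt_SF (mkStepFun (spike_step a b va vb H)) = 0.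
Proof.
  unfold RiemannInt_SF. simpl. destruct Rle_dec; simpl; ring.
Qed.

Lemma zero_step a b : a <= b -> IsStepFun (fun _ => 0) a b.
Proof.
  intros Hab. exists (a :: b :: nil). exists (0 :: nil). repeat split.
  - intros i Hi. simpl in Hi. destruct i; [simpl; auto | lia].
  - simpl. rewrite Rmin_left; auto.
  - simpl. rewrite Rmax_right; auto.
  - intros i Hi. simpl in Hi. destruct i; [|lia]. simpl. intros t _. auto.
Defined.

(* A function vanishing on the open interval (a, b) is integrable on [a, b],
   its distance to 0 being dominated by a spike. *)
Lemma int_spikefun e a b : a <= b -> (forall t, a < t < b -> e t = 0) -> Riemann_integrable e a b.
Proof.
  intros Hab He eps.
  exists (mkStepFun (zero_step a b Hab)).
  exists (mkStepFun (spike_step a b (Rabs (e a)) (Rabs (e b)) Hab)).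
  split.
  - intros t Ht. rewrite Rmin_left, Rmax_right in Ht by auto. simpl. unfold spike.
    destruct Req_EM_T as [E|E]. subst. rewrite Rminus_0_r. lra.
    destruct Req_EM_T as [E'|E']. subst. rewrite Rminus_0_r. lra.
    rewrite He by lra. rewrite Rminus_0_r, Rabs_R0. lra.
  - rewrite spike_int. rewrite Rabs_R0. apply cond_pos.
Qed.

Lemma int_endpts f g a b : a <= b -> Riemann_integrable f a b ->
  (forall t, a < t < b -> g t = f t) -> Riemann_integrable g a b.
Proof.
  intros Hab Hf Hg.
  assert (He : Riemann_integrable (fun t => g t - f t) a b).
  { apply int_spikefun; auto. intros. rewrite Hg; auto. ring. }
  pose proof (RiemannInt_P10 1 Hf He) as H.
  apply (Riemann_integrable_ext g (f := fun t => f t + 1 * (g t - f t))); [intros; ring | exact H].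
Qed.

Lemma RI_eq f a b (pr : Riemann_integrable f a b) : RI f a b = RiemannInt pr.
Proof.
  unfold RI. destruct excluded_middle_informative as [h|h].
  - apply RiemannInt_P5.
  - exfalso. apply h. constructor. auto.
Qed.

Lemma RI_not f a b : (Riemann_integrable f a b -> False) -> RI f a b = 0.
Proof.
  intros H. unfold RI. destruct excluded_middle_informative as [h|h]; auto.
  exfalso. destruct h as [pr]. auto.
Qed.

Lemma RI_scal f a b k : RI (fun t => k * f t) a b = k * RI f a b.
Proof.
  destruct (classic (inhabited (Riemann_integrable f a b))) as [[pr]|np].
  - pose proof (Riemann_integrable_scal k pr) as pr2.
    rewrite (RI_eq _ _ _ pr), (RI_eq _ _ _ pr2).
    pose proof (RiemannInt_P14 a b 0) as pr0.
    pose proof (RiemannInt_P10 k pr0 pr) as pr3.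
    assert (E : (fun x => fct_cte 0 x + k * f x) = (fun t => k * f t)).
    { apply functional_extensionality. intros. unfold fct_cte. ring. }
    pose proof (RiemannInt_P13 pr0 pr pr3) as E2.
    rewrite (RiemannInt_P15 pr0) in E2. revert pr3 E2. rewrite E. intros pr3 E2.
    rewrite (RiemannInt_P5 pr2 pr3). lra.
  - destruct (Req_dec k 0) as [Hk|Hk].
    + subst. rewrite Rmult_0_l.
      assert (E : (fun t => 0 * f t) = fct_cte 0) by (apply functional_extensionality; intros; unfold fct_cte; ring).
      rewrite E, (RI_eq _ _ _ (RiemannInt_P14 a b 0)), RiemannInt_P15. ring.
    + rewrite RI_not. rewrite RI_not. ring.
      intros pr; apply np; constructor; auto.
      intros pr. apply np. constructor.
      apply (Riemann_integrable_ext f (f := fun t => / k * (k * f t))). intros; field; auto.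
      apply Riemann_integrable_scal; auto.
Qed.

Lemma RI_ext f g a b : (forall t, Rmin a b <= t <= Rmax a b -> f t = g t) -> RI f a b = RI g a b.
Proof.
  intros H.
  destruct (classic (inhabited (Riemann_integrable f a b))) as [[pr]|np].
  - pose proof (Riemann_integrable_ext g H pr) as pr2.
    rewrite (RI_eq _ _ _ pr), (RI_eq _ _ _ pr2).
    destruct (Rle_dec a b).
    + apply RiemannInt_P18; auto. intros; apply H. rewrite Rmin_left, Rmax_right by auto. lra.
    + pose proof (RiemannInt_P1 pr) as pr'. pose proof (RiemannInt_P1 pr2) as pr2'.
      rewrite (RiemannInt_P8 pr pr'), (RiemannInt_P8 pr2 pr2'). f_equal.
      apply RiemannInt_P18; [lra|]. intros; apply H. rewrite Rmin_right, Rmax_left by lra. lra.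
  - assert (ng : Riemann_integrable g a b -> False).
    { intros pr. apply np. constructor. apply (Riemann_integrable_ext f (f := g)). intros; symmetry; auto. auto. }
    assert (nf : Riemann_integrable f a b -> False) by (intros pr; apply np; constructor; auto).
    rewrite (RI_not f a b nf), (RI_not g a b ng). auto.
Qed.

Lemma RI_mono f g a b : a <= b -> Riemann_integrable g a b ->
  (forall t, a <= t <= b -> f t <= g t) -> 0 <= RI g a b -> RI f a b <= RI g a b.
Proof.
  intros Hab prg H Hg.
  destruct (classic (inhabited (Riemann_integrable f a b))) as [[prf]|np].
  - rewrite (RI_eq _ _ _ prf), (RI_eq _ _ _ prg). apply RiemannInt_P19; auto. intros; apply H; lra.
  - rewrite (RI_not f a b); auto.
Qed.

Lemma RI_nonneg f a b : a <= b -> (forall t, a <= t <= b -> 0 <= f t) -> 0 <= RI f a b.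
Proof.
  intros Hab H.
  destruct (classic (inhabited (Riemann_integrable f a b))) as [[prf]|np].
  - rewrite (RI_eq _ _ _ prf).
    pose proof (RiemannInt_P19 (RiemannInt_P14 a b 0) prf Hab) as Hm.
    rewrite (RiemannInt_P15 (RiemannInt_P14 a b 0)) in Hm.
    assert (0 * (b - a) <= RiemannInt prf) by (apply Hm; intros; unfold fct_cte; apply H; lra).
    lra.
  - rewrite (RI_not f a b); [lra|]. intros pr; apply np; constructor; auto.
Qed.

Definition ind_le (a b : R) : R := if Rle_dec a b then 1 else 0.

Lemma cont_int f a b : (forall t, continuity_pt f t) -> Riemann_integrable f a b.
Proof.
  intros Hc. destruct (Rle_dec a b).
  - apply continuity_implies_RiemannInt; auto.
  - apply RiemannInt_P1. apply continuity_implies_RiemannInt; auto. lra.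
Qed.

Definition cutoff (L U : R) (f : R -> R) : R -> R := fun t => ind_le L t * ind_le t U * f t.

Lemma zero_int a b : Riemann_integrable (fun _ => 0) a b.
Proof. apply (Riemann_integrable_ext (fun _ => 0) (f := fct_cte 0)). intros; reflexivity. apply RiemannInt_P14. Qed.

Lemma RiemannInt_zero a b (pr : Riemann_integrable (fun _ => 0) a b) : RiemannInt pr = 0.
Proof.
  pose proof (RiemannInt_P14 a b 0) as pr0.
  assert (E : RiemannInt pr0 = 0) by (rewrite RiemannInt_P15; ring).
  rewrite <- E. destruct (Rle_dec a b).
  - apply RiemannInt_P18; auto.
  - rewrite (RiemannInt_P8 pr (RiemannInt_P1 pr)), (RiemannInt_P8 pr0 (RiemannInt_P1 pr0)).
    f_equal. apply RiemannInt_P18; [lra|]. intros; unfold fct_cte; reflexivity.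
Qed.

Lemma cutoff_integrable f a b L U : a <= L -> U <= b -> (forall t, continuity_pt f t) ->
  Riemann_integrable (cutoff L U f) a b.
Proof.
  intros HaL HUb Hc.
  destruct (Rle_dec L U) as [HLU|HLU].
  - apply (RiemannInt_P24 (b := U)).
    + apply (RiemannInt_P24 (b := L)).
      * apply (int_endpts (fun _ => 0)); auto. apply zero_int.
        intros t Ht. unfold cutoff, ind_le. destruct (Rle_dec L t); [lra|]. ring.
      * apply (Riemann_integrable_ext (cutoff L U f) (f := f)).
        intros t Ht. rewrite Rmin_left, Rmax_right in Ht by auto. unfold cutoff, ind_le.
        destruct (Rle_dec L t); [|lra]. destruct (Rle_dec t U); [|lra]. ring.
        apply cont_int; auto.
    + apply (int_endpts (fun _ => 0)); auto. apply zero_int.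
      intros t Ht. unfold cutoff, ind_le. destruct (Rle_dec t U); [lra|]. ring.
  - apply (Riemann_integrable_ext (cutoff L U f) (f := fun _ => 0)).
    intros t _. unfold cutoff, ind_le. destruct (Rle_dec L t); destruct (Rle_dec t U); try ring; lra.
    apply zero_int.
Qed.

Lemma cutoff_integral f a b L U : a <= L -> U <= b -> (forall t, continuity_pt f t) ->
  RI (cutoff L U f) a b = RI f L (Rmax L U).
Proof.
  intros HaL HUb Hc.
  destruct (Rle_dec L U) as [HLU|HLU].
  - rewrite Rmax_right by auto.
    assert (p123 : Riemann_integrable (cutoff L U f) a b) by (apply cutoff_integrable; auto; lra).
    assert (p1 : Riemann_integrable (cutoff L U f) a L) by (apply (RiemannInt_P22 p123); lra).
    assert (p12 : Riemann_integrable (cutoff L U f) a U) by (apply (RiemannInt_P22 p123); lra).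
    assert (p2 : Riemann_integrable (cutoff L U f) L U) by (apply (RiemannInt_P23 p12); lra).
    assert (p3 : Riemann_integrable (cutoff L U f) U b) by (apply (RiemannInt_P23 p123); lra).
    rewrite (RI_eq _ _ _ p123), <- (RiemannInt_P26 p12 p3 p123), <- (RiemannInt_P26 p1 p2 p12).
    pose proof (cont_int f L U Hc) as pf. rewrite (RI_eq _ _ _ pf).
    assert (E1 : RiemannInt p1 = 0).
    { rewrite <- (RiemannInt_zero a L (zero_int a L)). apply RiemannInt_P18; [lra|].
      intros t Ht. unfold cutoff, ind_le. destruct (Rle_dec L t); [lra|]. ring. }
    assert (E3 : RiemannInt p3 = 0).
    { rewrite <- (RiemannInt_zero U b (zero_int U b)). apply RiemannInt_P18; [lra|].
      intros t Ht. unfold cutoff, ind_le. destruct (Rle_dec t U); [lra|]. ring. }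
    assert (E2 : RiemannInt p2 = RiemannInt pf).
    { apply RiemannInt_P18; auto. intros t Ht. unfold cutoff, ind_le.
      destruct (Rle_dec L t); [|lra]. destruct (Rle_dec t U); [|lra]. ring. }
    lra.
  - rewrite Rmax_left by lra.
    rewrite (RI_eq _ _ _ (RiemannInt_P7 f L)), RiemannInt_P9.
    rewrite (RI_ext _ (fun _ => 0)).
    rewrite (RI_eq _ _ _ (zero_int a b)), RiemannInt_zero. auto.
    intros t _. unfold cutoff, ind_le. destruct (Rle_dec L t); destruct (Rle_dec t U); try ring; lra.
Qed.

Lemma RI_chasles f a b c : (forall t, continuity_pt f t) -> RI f a b + RI f b c = RI f a c.
Proof.
  intros Hc. rewrite (RI_eq _ _ _ (cont_int f a b Hc)), (RI_eq _ _ _ (cont_int f b c Hc)),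
    (RI_eq _ _ _ (cont_int f a c Hc)). apply RiemannInt_P26.
Qed.

Lemma RI_bound f a b B : (forall t, continuity_pt f t) -> (forall t, Rabs (f t) <= B) ->
  Rabs (RI f a b) <= B * Rabs (b - a).
Proof.
  intros Hc HB.
  assert (Hgen : forall a b, a <= b -> Rabs (RI f a b) <= B * (b - a)).
  { intros a0 b0 Hab. pose proof (cont_int f a0 b0 Hc) as pr. rewrite (RI_eq _ _ _ pr).
    assert (H0 : forall x, a0 < x < b0 -> - B <= f x <= B).
    { intros x _. specialize (HB x). unfold Rabs in HB. destruct Rcase_abs; lra. }
    pose proof (@RiemannInt_const_bound f a0 b0 (- B) B pr Hab H0) as H.
    unfold Rabs; destruct Rcase_abs; lra. }
  destruct (Rle_dec a b).
  - rewrite (Rabs_right (b - a)) by lra. auto.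
  - pose proof (RI_chasles f a b a Hc). rewrite (RI_eq _ _ _ (RiemannInt_P7 f a)), RiemannInt_P9 in H.
    replace (RI f a b) with (- RI f b a) by lra. rewrite Rabs_Ropp.
    rewrite (Rabs_left (b - a)) by lra. replace (- (b - a)) with (a - b) by ring. apply Hgen. lra.
Qed.

Lemma lip_cont f Lc : 0 <= Lc -> (forall s t, Rabs (f s - f t) <= Lc * Rabs (s - t)) -> forall t, continuity_pt f t.
Proof.
  intros HL Hf t. unfold continuity_pt, continue_in, limit1_in, limit_in. intros eps Heps.
  exists (eps / (Lc + 1)). split. apply Rdiv_lt_0_compat; lra.
  intros x [_ Hx]. simpl in *. unfold R_dist in *. eapply Rle_lt_trans. apply Hf.
  apply Rle_lt_trans with ((Lc + 1) * Rabs (x - t)).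
  apply Rmult_le_compat_r; [apply Rabs_pos | lra].
  apply (Rmult_lt_compat_l (Lc + 1)) in Hx; [|lra].
  replace ((Lc + 1) * (eps / (Lc + 1))) with eps in Hx by (field; lra). lra.
Qed.

(* A polytope is a list Q of affine forms
   c (coefficients fst c, constant snd c), and poly_ind D Q is the indicator
   of {x | c(x) >= 0 for all c in Q}.  Integrating poly_ind D Q * phi in one
   coordinate n, with phi bounded, Lipschitz and nonnegative, gives again
   poly_ind D Q' * phi' of the same kind: the forms not involving x_n survive,
   and the others cut the line into the interval [slice_lo, slice_hi], whose
   endpoints depend Lipschitz-continuously on x.  Hence all the iterated
   integrals in [iint] exist and [iint] is monotone. *)
Notation AffForm := ((nat -> R) * R)%type.
Definition aff_eval (D : nat) (c : AffForm) (x : Pt) : R := sumR D (fun p => fst c p * x p) + snd c.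
Fixpoint poly_ind (D : nat) (Q : list AffForm) (x : Pt) : R :=
  match Q with nil => 1 | c :: Q' => if Rle_dec 0 (aff_eval D c x) then poly_ind D Q' x else 0 end.

Lemma poly_ind_01 D Q x : poly_ind D Q x = 0 \/ poly_ind D Q x = 1.
Proof. induction Q; simpl; auto. destruct Rle_dec; auto. Qed.

Definition BoundedLip (D : nat) (phi : Pt -> R) : Prop := exists B Lc, 0 <= B /\ 0 <= Lc /\
  (forall x, Rabs (phi x) <= B) /\
  (forall x y, Rabs (phi x - phi y) <= Lc * sumR D (fun p => Rabs (x p - y p))).

Definition aff_rest D n (c : AffForm) (x : Pt) : R := aff_eval D c (upd x n 0).

Lemma aff_eval_upd D n c x t : (n < D)%nat -> aff_eval D c (upd x n t) = aff_rest D n c x + fst c n * t.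
Proof.
  intros Hn. unfold aff_rest, aff_eval.
  rewrite (sumR_ext D (fun p => fst c p * upd x n t p)
     (fun p => fst c p * upd x n 0 p + kron p n * (fst c p * t))).
  2:{ intros. rewrite !upd_kron. ring. }
  rewrite sumR_plus. rewrite (sumR_kron_l D n (fun p => fst c p * t)) by auto. ring.
Qed.

Lemma upd_same (x : Pt) n : upd x n (x n) = x.
Proof. apply functional_extensionality. intros i. rewrite upd_kron. ring. Qed.

Lemma aff_eval_rest D n c x : (n < D)%nat -> aff_eval D c x = aff_rest D n c x + fst c n * x n.
Proof. intros. rewrite <- (aff_eval_upd D n c x (x n) H). rewrite upd_same. auto. Qed.

Definition forms_free (n : nat) (Q : list AffForm) : list AffForm :=
  filter (fun c => if Req_EM_T (fst c n) 0 then true else false) Q.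

Lemma forms_free_cons n c Q : forms_free n (c :: Q) = if Req_dec_T (fst c n) 0 then c :: forms_free n Q else forms_free n Q.
Proof. unfold forms_free. cbn [filter]. repeat (match goal with |- context [Req_dec_T ?a ?b] => destruct (Req_dec_T a b) end); try reflexivity; exfalso; auto. Qed.

Definition slice_lo D n M (Q : list AffForm) (x : Pt) : R :=
  fold_right (fun c acc => if Rlt_dec 0 (fst c n) then Rmax acc (- aff_rest D n c x / fst c n) else acc) (- M) Q.
Definition slice_hi D n M (Q : list AffForm) (x : Pt) : R :=
  fold_right (fun c acc => if Rlt_dec (fst c n) 0 then Rmin acc (- aff_rest D n c x / fst c n) else acc) M Q.

Lemma slice_lo_ge D n M Q x : - M <= slice_lo D n M Q x.
Proof. induction Q; simpl; [lra|]. destruct Rlt_dec; auto. eapply Rle_trans; [apply IHQ | apply Rmax_l]. Qed.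

Lemma slice_hi_le D n M Q x : slice_hi D n M Q x <= M.
Proof. induction Q; simpl; [lra|]. destruct Rlt_dec; auto. eapply Rle_trans; [apply Rmin_l | apply IHQ]. Qed.

Lemma ind_le_true a b : a <= b -> ind_le a b = 1.
Proof. intros. unfold ind_le. destruct Rle_dec; auto; lra. Qed.
Lemma ind_le_false a b : ~ a <= b -> ind_le a b = 0.
Proof. intros. unfold ind_le. destruct Rle_dec; auto; lra. Qed.

Lemma ind_le_max a b t : ind_le (Rmax a b) t = ind_le a t * ind_le b t.
Proof. unfold ind_le, Rmax. destruct (Rle_dec a b); destruct (Rle_dec a t); destruct (Rle_dec b t);
  try ring; lra. Qed.

Lemma ind_le_min a b t : ind_le t (Rmin a b) = ind_le t a * ind_le t b.
Proof. unfold ind_le, Rmin. destruct (Rle_dec a b); destruct (Rle_dec t a); destruct (Rle_dec t b);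
  try ring; lra. Qed.

Lemma poly_ind_slice D n M Q x t : (n < D)%nat -> - M <= t <= M ->
  poly_ind D Q (upd x n t) = poly_ind D (forms_free n Q) x * (ind_le (slice_lo D n M Q x) t * ind_le t (slice_hi D n M Q x)).
Proof.
  intros Hn Ht. induction Q as [|c Q IH].
  - simpl. unfold ind_le. destruct (Rle_dec (- M) t); [|lra]. destruct (Rle_dec t M); [|lra]. ring.
  - rewrite forms_free_cons. simpl. rewrite aff_eval_upd by auto.
    destruct (Req_dec_T (fst c n) 0) as [E|E].
    + simpl. rewrite (aff_eval_rest D n c x Hn), E.
      destruct (Rlt_dec 0 0); [lra|]. destruct (Rlt_dec 0 0); [lra|].
      replace (aff_rest D n c x + 0 * t) with (aff_rest D n c x + 0 * x n) by ring.
      destruct Rle_dec; auto. ring.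
    + destruct (Rlt_dec 0 (fst c n)) as [Hp|Hp].
      * destruct (Rlt_dec (fst c n) 0); [lra|].
        rewrite ind_le_max. rewrite IH.
        destruct (Rle_dec (- aff_rest D n c x / fst c n) t) as [H1|H1].
        -- rewrite (ind_le_true _ _ H1). destruct (Rle_dec 0 (aff_rest D n c x + fst c n * t)) as [H2|H2]. ring.
           exfalso. apply H2. apply (Rmult_le_compat_r (fst c n)) in H1; [|lra].
           unfold Rdiv in H1. rewrite Rmult_assoc, Rinv_l in H1 by lra. lra.
        -- rewrite (ind_le_false _ _ H1). destruct (Rle_dec 0 (aff_rest D n c x + fst c n * t)) as [H2|H2]; [|ring].
           exfalso. apply H1. apply (Rmult_le_reg_r (fst c n)); auto.
           unfold Rdiv. rewrite Rmult_assoc, Rinv_l by lra. lra.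
      * assert (Hn' : fst c n < 0) by lra. destruct (Rlt_dec (fst c n) 0); [|lra].
        rewrite ind_le_min. rewrite IH.
        destruct (Rle_dec t (- aff_rest D n c x / fst c n)) as [H1|H1].
        -- rewrite (ind_le_true _ _ H1). destruct (Rle_dec 0 (aff_rest D n c x + fst c n * t)) as [H2|H2]. ring.
           exfalso. apply H2. apply (Rmult_le_compat_neg_l (fst c n)) in H1; [|lra].
           unfold Rdiv in H1. replace (fst c n * (- aff_rest D n c x * / fst c n)) with (- aff_rest D n c x) in H1 by (field; lra). lra.
        -- rewrite (ind_le_false _ _ H1). destruct (Rle_dec 0 (aff_rest D n c x + fst c n * t)) as [H2|H2]; [|ring].
           exfalso. apply H1. apply (Rmult_le_reg_l (- fst c n)); [lra|].
           unfold Rdiv. replace (- fst c n * (- aff_rest D n c x * / fst c n)) with (aff_rest D n c x) by (field; lra). lra.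
Qed.

Lemma RI_minus f g a b : (forall t, continuity_pt f t) -> (forall t, continuity_pt g t) ->
  RI f a b - RI g a b = RI (fun t => f t - g t) a b.
Proof.
  intros Hf Hg. pose proof (cont_int f a b Hf) as pf. pose proof (cont_int g a b Hg) as pg.
  pose proof (RiemannInt_P10 (-1) pf pg) as ph.
  rewrite (RI_eq _ _ _ pf), (RI_eq _ _ _ pg).
  rewrite (RI_ext (fun t => f t - g t) (fun t => f t + -1 * g t)) by (intros; ring).
  rewrite (RI_eq _ _ _ ph). rewrite (RiemannInt_P13 pf pg ph). ring.
Qed.

Lemma upd_diff_same D n x s t : (n < D)%nat -> sumR D (fun p => Rabs (upd x n s p - upd x n t p)) = Rabs (s - t).
Proof.
  intros Hn. rewrite (sumR_ext D _ (fun p => kron p n * Rabs (s - t))).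
  apply sumR_kron_l; auto.
  intros p Hp. rewrite !upd_kron. replace (x p + kron p n * (s - x n) - (x p + kron p n * (t - x n))) with (kron p n * (s - t)) by ring.
  rewrite Rabs_mult. unfold kron. destruct (Nat.eqb p n); [rewrite Rabs_R1 | rewrite Rabs_R0]; ring.
Qed.

Lemma upd_diff_le D n x y t : sumR D (fun p => Rabs (upd x n t p - upd y n t p)) <= sumR D (fun p => Rabs (x p - y p)).
Proof.
  apply sumR_le. intros p Hp. unfold upd. destruct (Nat.eqb p n).
  - replace (t - t) with 0 by ring. rewrite Rabs_R0. apply Rabs_pos.
  - lra.
Qed.

Definition l1dist D (x y : Pt) : R := sumR D (fun p => Rabs (x p - y p)).

Lemma l1dist_nonneg D x y : 0 <= l1dist D x y.
Proof. unfold l1dist. apply sumR_nonneg. intros. apply Rabs_pos. Qed.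

Lemma aff_rest_lip D n c x y : Rabs (aff_rest D n c x - aff_rest D n c y) <= sumR D (fun p => Rabs (fst c p)) * l1dist D x y.
Proof.
  unfold aff_rest, aff_eval.
  replace (sumR D (fun p => fst c p * upd x n 0 p) + snd c - (sumR D (fun p => fst c p * upd y n 0 p) + snd c))
    with (sumR D (fun p => fst c p * (upd x n 0 p - upd y n 0 p))).
  2:{ rewrite (sumR_ext D _ (fun p => fst c p * upd x n 0 p - fst c p * upd y n 0 p)) by (intros; ring).
      rewrite sumR_minus. ring. }
  eapply Rle_trans. apply sumR_abs. rewrite <- sumR_scalr. apply sumR_le. intros p Hp.
  rewrite Rabs_mult. apply Rmult_le_compat_l. apply Rabs_pos.
  eapply Rle_trans. 2:{ apply (upd_diff_le D n x y 0). }
  apply (sumR_term_le D (fun p => Rabs (upd x n 0 p - upd y n 0 p)) p); auto.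
  intros; apply Rabs_pos.
Qed.

Lemma Rmax_lip a b a' b' : Rabs (Rmax a b - Rmax a' b') <= Rabs (a - a') + Rabs (b - b').
Proof. unfold Rmax. destruct (Rle_dec a b); destruct (Rle_dec a' b'); unfold Rabs;
  repeat destruct Rcase_abs; lra. Qed.

Lemma Rmin_lip a b a' b' : Rabs (Rmin a b - Rmin a' b') <= Rabs (a - a') + Rabs (b - b').
Proof. unfold Rmin. destruct (Rle_dec a b); destruct (Rle_dec a' b'); unfold Rabs;
  repeat destruct Rcase_abs; lra. Qed.

Definition slice_lip D n (Q : list AffForm) : R :=
  fold_right (fun c acc => acc + sumR D (fun p => Rabs (fst c p)) * / Rabs (fst c n)) 0 Q.

Lemma inv_abs_nonneg a : 0 <= / Rabs a.
Proof. destruct (Req_dec a 0). subst. rewrite Rabs_R0, Rinv_0. lra.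
  left. apply Rinv_0_lt_compat. apply Rabs_pos_lt. auto. Qed.

Lemma slice_lip_nonneg D n Q : 0 <= slice_lip D n Q.
Proof. induction Q; simpl; [lra|]. pose proof (inv_abs_nonneg (fst a n)).
  assert (0 <= sumR D (fun p => Rabs (fst a p))) by (apply sumR_nonneg; intros; apply Rabs_pos).
  pose proof (Rmult_le_pos _ _ H0 H). lra. Qed.

Lemma slice_bound_lip D n c x y : fst c n <> 0 ->
  Rabs (- aff_rest D n c x / fst c n - - aff_rest D n c y / fst c n) <=
  sumR D (fun p => Rabs (fst c p)) * / Rabs (fst c n) * l1dist D x y.
Proof.
  intros Hn. replace (- aff_rest D n c x / fst c n - - aff_rest D n c y / fst c n) with
    (- (aff_rest D n c x - aff_rest D n c y) * / fst c n) by (field; auto).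
  rewrite Rabs_mult, Rabs_Ropp, Rabs_inv.
  pose proof (aff_rest_lip D n c x y). pose proof (inv_abs_nonneg (fst c n)).
  replace (sumR D (fun p => Rabs (fst c p)) * / Rabs (fst c n) * l1dist D x y) with
    (sumR D (fun p => Rabs (fst c p)) * l1dist D x y * / Rabs (fst c n)) by ring.
  apply Rmult_le_compat_r; auto.
Qed.

Lemma slice_lo_lip D n M Q x y : Rabs (slice_lo D n M Q x - slice_lo D n M Q y) <= slice_lip D n Q * l1dist D x y.
Proof.
  induction Q as [|c Q IH]; simpl.
  - replace (- M - - M) with 0 by ring. rewrite Rabs_R0. lra.
  - pose proof (l1dist_nonneg D x y).
    assert (T : 0 <= sumR D (fun p => Rabs (fst c p)) * / Rabs (fst c n) * l1dist D x y).
    { apply Rmult_le_pos; auto. apply Rmult_le_pos. apply sumR_nonneg; intros; apply Rabs_pos. apply inv_abs_nonneg. }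
    destruct (Rlt_dec 0 (fst c n)).
    + eapply Rle_trans. apply Rmax_lip. pose proof (slice_bound_lip D n c x y ltac:(lra)). nra.
    + nra.
Qed.

Lemma slice_hi_lip D n M Q x y : Rabs (slice_hi D n M Q x - slice_hi D n M Q y) <= slice_lip D n Q * l1dist D x y.
Proof.
  induction Q as [|c Q IH]; simpl.
  - replace (M - M) with 0 by ring. rewrite Rabs_R0. pose proof (slice_lip_nonneg D n nil). simpl. lra.
  - pose proof (l1dist_nonneg D x y).
    assert (T : 0 <= sumR D (fun p => Rabs (fst c p)) * / Rabs (fst c n) * l1dist D x y).
    { apply Rmult_le_pos; auto. apply Rmult_le_pos. apply sumR_nonneg; intros; apply Rabs_pos. apply inv_abs_nonneg. }
    destruct (Rlt_dec (fst c n) 0).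
    + eapply Rle_trans. apply Rmin_lip. pose proof (slice_bound_lip D n c x y ltac:(lra)). nra.
    + nra.
Qed.

Definition slice_int D n M Q (phi : Pt -> R) (x : Pt) : R :=
  RI (fun t => phi (upd x n t)) (slice_lo D n M Q x) (Rmax (slice_lo D n M Q x) (slice_hi D n M Q x)).

Lemma slice_cont D n (phi : Pt -> R) x : (n < D)%nat -> BoundedLip D phi -> forall t, continuity_pt (fun t => phi (upd x n t)) t.
Proof.
  intros Hn (B & Lc & HB & HLc & Hb & Hl).
  apply (lip_cont _ Lc HLc). intros s t. eapply Rle_trans. apply Hl.
  rewrite upd_diff_same by auto. lra.
Qed.

Lemma slice_step D n M Q phi x : (n < D)%nat -> 0 < M -> BoundedLip D phi ->
  inhabited (Riemann_integrable (fun t => poly_ind D Q (upd x n t) * phi (upd x n t)) (- M) M) /\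
  RI (fun t => poly_ind D Q (upd x n t) * phi (upd x n t)) (- M) M = poly_ind D (forms_free n Q) x * slice_int D n M Q phi x.
Proof.
  intros Hn HM HL.
  set (L := slice_lo D n M Q x). set (U := slice_hi D n M Q x).
  pose proof (slice_cont D n phi x Hn HL) as Hc.
  assert (HL1 : - M <= L) by apply slice_lo_ge. assert (HU1 : U <= M) by apply slice_hi_le.
  assert (E : forall t, Rmin (- M) M <= t <= Rmax (- M) M ->
     poly_ind D (forms_free n Q) x * cutoff L U (fun t => phi (upd x n t)) t = poly_ind D Q (upd x n t) * phi (upd x n t)).
  { intros t Ht. rewrite Rmin_left, Rmax_right in Ht by lra. rewrite (poly_ind_slice D n M Q x t Hn Ht).
    unfold cutoff. fold L U. ring. }
  split.
  - constructor. apply (Riemann_integrable_ext _ E). apply Riemann_integrable_scal. apply cutoff_integrable; auto.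
  - rewrite <- (RI_ext _ _ _ _ E). rewrite RI_scal. unfold slice_int. fold L U. rewrite cutoff_integral; auto.
Qed.

Lemma slice_int_nonneg D n M Q phi : (forall x, 0 <= phi x) -> forall x, 0 <= slice_int D n M Q phi x.
Proof. intros H x. unfold slice_int. apply RI_nonneg. apply Rmax_l. intros; auto. Qed.

(* Slice integrals of bounded Lipschitz functions are Lipschitz: the
   integrands differ by at most Lc |x - y|_1, and the endpoints move by at
   most slice_lip |x - y|_1. *)
Lemma slice_int_diff D n M Q phi B Lc : (n < D)%nat -> 0 < M -> 0 <= B -> 0 <= Lc ->
  (forall x, Rabs (phi x) <= B) ->
  (forall x y, Rabs (phi x - phi y) <= Lc * sumR D (fun p => Rabs (x p - y p))) ->
  forall x y, Rabs (slice_int D n M Q phi x - slice_int D n M Q phi y)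
    <= (3 * B * slice_lip D n Q + 2 * M * Lc) * sumR D (fun p => Rabs (x p - y p)).
Proof.
  intros Hn HM HB HLc Hb Hl x y.
  assert (HL : BoundedLip D phi) by (exists B, Lc; auto).
  pose proof (slice_lip_nonneg D n Q) as HK.
  unfold slice_int.
  set (Lx := slice_lo D n M Q x). set (Ly := slice_lo D n M Q y).
  set (Vx := Rmax Lx (slice_hi D n M Q x)). set (Vy := Rmax Ly (slice_hi D n M Q y)).
  set (fx := fun t => phi (upd x n t)). set (fy := fun t => phi (upd y n t)).
  assert (Cx : forall t, continuity_pt fx t) by (apply (slice_cont D n phi x Hn HL)).
  assert (Cy : forall t, continuity_pt fy t) by (apply (slice_cont D n phi y Hn HL)).
  assert (E1 : RI fx Lx Vx = RI fx Lx Ly + RI fx Ly Vy + RI fx Vy Vx).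
  { rewrite (RI_chasles fx Lx Ly Vy Cx), (RI_chasles fx Lx Vy Vx Cx). auto. }
  assert (E2 : RI fx Ly Vy - RI fy Ly Vy = RI (fun t => fx t - fy t) Ly Vy) by (apply RI_minus; auto).
  assert (S := l1dist_nonneg D x y).
  assert (B1 : Rabs (RI fx Lx Ly) <= B * (slice_lip D n Q * l1dist D x y)).
  { eapply Rle_trans. apply RI_bound; auto. intros; apply Hb. apply Rmult_le_compat_l; auto.
    rewrite Rabs_minus_sym. apply slice_lo_lip. }
  assert (B2 : Rabs (RI fx Vy Vx) <= B * (2 * (slice_lip D n Q * l1dist D x y))).
  { eapply Rle_trans. apply RI_bound; auto. intros; apply Hb. apply Rmult_le_compat_l; auto.
    unfold Vx, Vy. eapply Rle_trans. apply Rmax_lip.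
    pose proof (slice_lo_lip D n M Q x y). pose proof (slice_hi_lip D n M Q x y). fold Lx Ly in H. lra. }
  assert (B3 : Rabs (RI (fun t => fx t - fy t) Ly Vy) <= Lc * l1dist D x y * (2 * M)).
  { eapply Rle_trans. apply RI_bound.
    intros t. apply continuity_pt_minus; auto.
    intros t. unfold fx, fy. eapply Rle_trans. apply Hl. apply Rmult_le_compat_l; auto. apply upd_diff_le.
    apply Rmult_le_compat_l. apply Rmult_le_pos; auto.
    unfold Vy. pose proof (slice_lo_ge D n M Q y). pose proof (slice_hi_le D n M Q y). fold Ly in H.
    unfold Rmax. destruct Rle_dec; unfold Rabs; destruct Rcase_abs; lra. }
  replace (RI fx Lx Vx - RI fy Ly Vy) with (RI fx Lx Ly + RI fx Vy Vx + (RI fx Ly Vy - RI fy Ly Vy)) by lra.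
  rewrite E2. eapply Rle_trans. apply Rabs_triang. eapply Rle_trans. apply Rplus_le_compat_r. apply Rabs_triang.
  unfold l1dist in *. nra.
Qed.

Lemma slice_int_lip D n M Q phi : (n < D)%nat -> 0 < M -> BoundedLip D phi -> BoundedLip D (slice_int D n M Q phi).
Proof.
  intros Hn HM HL. pose proof HL as (B & Lc & HB & HLc & Hb & Hl).
  pose proof (slice_lip_nonneg D n Q) as HK.
  exists (B * (2 * M)), (3 * B * slice_lip D n Q + 2 * M * Lc). repeat split.
  - apply Rmult_le_pos; lra.
  - assert (0 <= B * slice_lip D n Q) by (apply Rmult_le_pos; auto). assert (0 <= M * Lc) by (apply Rmult_le_pos; lra). lra.
  - intros x. unfold slice_int. eapply Rle_trans. apply RI_bound. apply (slice_cont D n phi x Hn HL). intros; apply Hb.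
    apply Rmult_le_compat_l; auto.
    pose proof (slice_lo_ge D n M Q x). pose proof (slice_hi_le D n M Q x).
    unfold Rmax. destruct Rle_dec; unfold Rabs; destruct Rcase_abs; lra.
  - apply slice_int_diff; auto.
Qed.

Lemma iint_poly_form D M n Q phi : (n <= D)%nat -> 0 < M -> BoundedLip D phi -> (forall x, 0 <= phi x) ->
  exists Q' phi', BoundedLip D phi' /\ (forall x, 0 <= phi' x) /\
    forall x, iint n M (fun y => poly_ind D Q y * phi y) x = poly_ind D Q' x * phi' x.
Proof.
  intros Hn HM HL Hp. induction n as [|n IH].
  - exists Q, phi. repeat split; auto.
  - destruct IH as (Q1 & phi1 & HL1 & Hp1 & E1). lia.
    exists (forms_free n Q1), (slice_int D n M Q1 phi1). split; [|split].
    + apply slice_int_lip; auto.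
    + apply slice_int_nonneg; auto.
    + intros x. simpl.
      replace (fun t => iint n M (fun y => poly_ind D Q y * phi y) (upd x n t)) with
        (fun t => poly_ind D Q1 (upd x n t) * phi1 (upd x n t)) by (apply functional_extensionality; intros; rewrite E1; auto).
      apply slice_step; auto.
Qed.

Lemma iint_slice_integrable D M n Q phi : (n < D)%nat -> 0 < M -> BoundedLip D phi -> (forall x, 0 <= phi x) ->
  forall x, inhabited (Riemann_integrable (fun t => iint n M (fun y => poly_ind D Q y * phi y) (upd x n t)) (- M) M).
Proof.
  intros Hn HM HL Hp x.
  destruct (iint_poly_form D M n Q phi ltac:(lia) HM HL Hp) as (Q1 & phi1 & HL1 & Hp1 & E1).
  replace (fun t => iint n M (fun y => poly_ind D Q y * phi y) (upd x n t)) with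
    (fun t => poly_ind D Q1 (upd x n t) * phi1 (upd x n t)) by (apply functional_extensionality; intros; rewrite E1; auto).
  apply slice_step; auto.
Qed.

Lemma iint_mono M n (F G : Pt -> R) : 0 < M ->
  (forall m, (m < n)%nat -> forall x, inhabited (Riemann_integrable (fun t => iint m M G (upd x m t)) (- M) M)) ->
  (forall x, 0 <= G x) -> (forall x, F x <= G x) ->
  forall x, iint n M F x <= iint n M G x /\ 0 <= iint n M G x.
Proof.
  intros HM Hint HG HFG. induction n as [|n IH]; intros x.
  - simpl. auto.
  - simpl. assert (IH' : forall x, iint n M F x <= iint n M G x /\ 0 <= iint n M G x).
    { apply IH. intros; apply Hint; lia. }
    destruct (Hint n ltac:(lia) x) as [pr].
    assert (Hnn : 0 <= RI (fun t => iint n M G (upd x n t)) (- M) M).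
    { apply RI_nonneg. lra. intros; apply IH'. }
    split; auto. apply RI_mono; auto. lra. intros; apply IH'.
Qed.

Lemma iint_scal M n (F : Pt -> R) k : forall x, iint n M (fun y => k * F y) x = k * iint n M F x.
Proof.
  induction n as [|n IH]; intros x; simpl; auto.
  replace (fun t => iint n M (fun y => k * F y) (upd x n t)) with (fun t => k * iint n M F (upd x n t))
    by (apply functional_extensionality; intros; rewrite IH; auto).
  apply RI_scal.
Qed.

Lemma iint_ext M n (F G : Pt -> R) : (forall x, F x = G x) -> forall x, iint n M F x = iint n M G x.
Proof. intros H. replace F with G. auto. apply functional_extensionality. intros; auto. Qed.

Lemma iint_bound D M (Q : list AffForm) (f : Pt -> R) (kap : R) : 0 < M -> 0 <= kap ->
  (forall x, f x <= poly_ind D Q x * kap) ->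
  iint D M f (fun _ => 0) <= kap * iint D M (fun y => poly_ind D Q y * 1) (fun _ => 0).
Proof.
  intros HM Hk Hf.
  assert (HL : BoundedLip D (fun _ => kap)).
  { exists kap, 0. repeat split; auto; try lra. intros; rewrite Rabs_right; lra.
    intros; replace (kap - kap) with 0 by ring. rewrite Rabs_R0. apply Rmult_le_pos. lra. apply sumR_nonneg; intros; apply Rabs_pos. }
  assert (Hmono := iint_mono M D f (fun y => poly_ind D Q y * kap) HM).
  rewrite <- iint_scal.
  rewrite (iint_ext M D (fun y => kap * (poly_ind D Q y * 1)) (fun y => poly_ind D Q y * kap)) by (intros; ring).
  apply Hmono.
  - intros m Hm x. apply iint_slice_integrable; auto.
  - intros x. destruct (poly_ind_01 D Q x) as [E|E]; rewrite E; lra.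
  - auto.
Qed.

(* K itself is the polytope of the d+1 barycentric coordinate forms. *)
Definition face_form d P (j : nat) : AffForm :=
  (fun p => BTinv d P p j, - sumR d (fun p => BTinv d P p j * P O p)).
Definition face_form0 d P : AffForm :=
  (fun p => - sumR d (fun j => BTinv d P p j), 1 + sumR d (fun j => sumR d (fun p => BTinv d P p j * P O p))).
Definition K_forms d P : list AffForm := face_form0 d P :: map (face_form d P) (seq 0 d).

Lemma aff_eval_face d P j x : aff_eval d (face_form d P j) x = mu d P x j.
Proof. unfold aff_eval, face_form, mu. simpl.
  rewrite (sumR_ext d (fun p => BTinv d P p j * (x p - P O p)) (fun p => BTinv d P p j * x p - BTinv d P p j * P O p)) by (intros; ring).
  rewrite sumR_minus. ring. Qed.

Lemma aff_eval_face0 d P x : aff_eval d (face_form0 d P) x = 1 - sumR d (mu d P x).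
Proof.
  unfold aff_eval, face_form0, mu. simpl.
  rewrite (sumR_ext d (fun p => - sumR d (fun j => BTinv d P p j) * x p)
     (fun p => - sumR d (fun j => BTinv d P p j * x p))).
  2:{ intros. rewrite (sumR_scalr d (x i)). rewrite Ropp_mult_distr_l. reflexivity. }
  rewrite (sumR_ext d (fun j => sumR d (fun p => BTinv d P p j * (x p - P O p)))
     (fun j => sumR d (fun p => BTinv d P p j * x p) - sumR d (fun p => BTinv d P p j * P O p))).
  2:{ intros. rewrite <- sumR_minus. apply sumR_ext; intros; ring. }
  rewrite sumR_minus. rewrite (sumR_swap d d (fun j p => BTinv d P p j * x p)).
  rewrite (sumR_ext d (fun p => - sumR d (fun j => BTinv d P p j * x p)) (fun p => -1 * sumR d (fun j => BTinv d P p j * x p))) by (intros; ring).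
  rewrite sumR_scal. ring.
Qed.

Lemma poly_ind_one D Q x : (forall c, In c Q -> 0 <= aff_eval D c x) -> poly_ind D Q x = 1.
Proof. induction Q as [|c Q IH]; simpl; intros H; auto. destruct Rle_dec as [_|n].
  apply IH; auto. exfalso. apply n. apply H; auto. Qed.

Lemma poly_ind_zero D Q x c : In c Q -> aff_eval D c x < 0 -> poly_ind D Q x = 0.
Proof. induction Q as [|c' Q IH]; simpl; intros Hin Hv. contradiction.
  destruct Rle_dec as [Hl|Hl]. destruct Hin as [<-|Hin]. lra. apply IH; auto. auto. Qed.

Lemma K_indicator d P x : LeftInv d P -> RightInv d P ->
  (if excluded_middle_informative (inK d P x) then 1 else 0) = poly_ind d (K_forms d P) x.
Proof.
  intros HL HR. destruct excluded_middle_informative as [HK|HK].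
  - symmetry. apply poly_ind_one. intros c Hc. unfold K_forms in Hc. destruct Hc as [<-|Hc].
    + rewrite aff_eval_face0. pose proof (bary_nonneg d P x HR HK 0 ltac:(lia)). simpl in H. auto.
    + apply in_map_iff in Hc. destruct Hc as [j [<- Hj]]. apply in_seq in Hj.
      rewrite aff_eval_face. pose proof (bary_nonneg d P x HR HK (S j) ltac:(lia)). simpl in H. auto.
  - symmetry. apply NNPP. intros Hn. apply HK. apply inK_of_mu; auto.
    + intros j Hj. apply Rnot_lt_le. intros Hlt. apply Hn. apply (poly_ind_zero d _ x (face_form d P j)).
      right. apply in_map. apply in_seq. lia. rewrite aff_eval_face. auto.
    + apply Rnot_lt_le. intros Hlt. apply Hn. apply (poly_ind_zero d _ x (face_form0 d P)). left; auto.
      rewrite aff_eval_face0. auto.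
Qed.

Lemma fold_max_le (l : list R) B : 0 <= B -> (forall v, In v l -> v <= B) -> fold_right Rmax 0 l <= B.
Proof. induction l; simpl; intros; auto. apply Rmax_lub; auto. Qed.

Lemma bigmax2_le d (f : nat -> nat -> R) B : 0 <= B ->
  (forall m p, (m < d)%nat -> (p < d)%nat -> f m p <= B) -> bigmax2 d f <= B.
Proof.
  intros HB Hf. unfold bigmax2. apply fold_max_le; auto. intros v Hv.
  apply in_flat_map in Hv. destruct Hv as [m [Hm Hv]]. apply in_map_iff in Hv. destruct Hv as [p [<- Hp]].
  apply in_seq in Hm. apply in_seq in Hp. apply Hf; lia.
Qed.

Lemma boxbound_pos d P : 0 < boxbound d P.
Proof. unfold boxbound. assert (0 <= sumR (S d) (fun j => sumR d (fun p => Rabs (P j p)))).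
  { apply sumR_nonneg; intros; apply sumR_nonneg; intros; apply Rabs_pos. } lra. Qed.

Lemma intK_bound d P (f : Pt -> R) kap : LeftInv d P -> RightInv d P -> 0 <= kap ->
  (forall x, inK d P x -> f x <= kap) ->
  intK d P f <= kap * intK d P (fun _ => 1).
Proof.
  intros HL HR Hk Hf. unfold intK.
  rewrite (iint_ext _ d (fun x => if excluded_middle_informative (inK d P x) then 1 else 0)
      (fun y => poly_ind d (K_forms d P) y * 1)).
  2:{ intros x. rewrite <- K_indicator by auto. ring. }
  apply iint_bound. apply boxbound_pos. auto.
  intros x. rewrite <- K_indicator by auto. destruct excluded_middle_informative. rewrite Rmult_1_l. auto. lra.
Qed.

Lemma intK_const d P k : intK d P (fun _ => k) = k * intK d P (fun _ => 1).
Proof.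
  unfold intK. rewrite <- iint_scal. apply iint_ext. intros. destruct excluded_middle_informative; ring.
Qed.

Lemma intK_one_nonneg d P : LeftInv d P -> RightInv d P -> 0 <= intK d P (fun _ => 1).
Proof.
  intros HL HR. unfold intK.
  rewrite (iint_ext _ d (fun x => if excluded_middle_informative (inK d P x) then 1 else 0)
      (fun y => poly_ind d (K_forms d P) y * 1)).
  2:{ intros x. rewrite <- K_indicator by auto. ring. }
  apply (iint_mono (boxbound d P) d (fun y => poly_ind d (K_forms d P) y * 1) (fun y => poly_ind d (K_forms d P) y * 1)).
  apply boxbound_pos.
  intros m Hm x. apply iint_slice_integrable; auto. apply boxbound_pos.
  exists 1, 0. repeat split; try lra. intros; rewrite Rabs_R1; lra.
  intros; replace (1 - 1) with 0 by ring. rewrite Rabs_R0. rewrite Rmult_0_l. lra.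
  intros; lra.
  intros x. destruct (poly_ind_01 d (K_forms d P) x) as [E|E]; rewrite E; lra.
  intros; lra.
Qed.

(* The coefficients (B_K^T)^{-1}_{mj} (B_K^T)_{jp} of Lambda_{m,p} sum to at
   most d sigma / 2 <= 3 sigma / 2, the shape-regularity bound. *)
Lemma Lambda_coeff_bound d P r sigma m p : (d = 2 \/ d = 3)%nat -> 0 < r -> 0 <= sigma ->
  (forall m j, (m < d)%nat -> (j < d)%nat -> Rabs (BTinv d P m j) <= / (2 * r)) ->
  (forall i j, (i <= d)%nat -> (j <= d)%nat -> edist d (P i) (P j) <= sigma * r) ->
  (m < d)%nat -> (p < d)%nat ->
  sumR d (fun j => Rabs (BTinv d P m j * BT P j p)) <= 3 * sigma / 2.
Proof.
  intros Hd Hr Hs HN Hsig Hm Hp.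
  apply Rle_trans with (sumR d (fun _ => sigma / 2)).
  - apply sumR_le. intros j Hj. rewrite Rabs_mult.
    assert (E1 : Rabs (BT P j p) <= sigma * r).
    { unfold BT. eapply Rle_trans. apply (abs_le_edist d); auto. apply Hsig; lia. }
    pose proof (HN m j Hm Hj). pose proof (Rabs_pos (BTinv d P m j)). pose proof (Rabs_pos (BT P j p)).
    apply Rle_trans with (/ (2 * r) * (sigma * r)).
    apply Rmult_le_compat; auto. right. field. lra.
  - rewrite sumR_const. destruct Hd as [-> | ->]; simpl; lra.
Qed.

Theorem lemma5p3 :
  forall d : nat, (d = 2 \/ d = 3)%nat ->
  forall sigma : R, exists C : R,
  forall reg : option R, (forall L, reg = Some L -> 2 <= L) ->
  forall (P : nat -> Pt) (A : nat -> Mat) (h r : R) (c : Pt),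
    0 < r ->
    (forall y : Pt, sumR d (fun p => (y p - c p) ^ 2) <= r ^ 2 -> inK d P y) ->
    (forall i j, (i <= d)%nat -> (j <= d)%nat -> edist d (P i) (P j) <= sigma * r) ->
    (forall i j, (i <= d)%nat -> (j <= d)%nat -> edist d (P i) (P j) <= h) ->
    (forall j, (j <= d)%nat -> posdef d (A j)) ->
    intK d P (fun x => normsq d
        (msub (p1interp d P (fun j => mfun d (Bfun reg) (A j)) x)
              (mfun d (Bfun reg) (phiK d P A x))))
    + bigmax2 d (fun m p => intK d P (fun x => normsq d
        (msub (Lambda d reg P A m p)
              (mscale (kron m p) (mfun d (Bfun reg) (phiK d P A x))))))
    <= C * h ^ 2 * intK d P (fun x => gradsq d (phiK d P A) x).
Proof.
  intros d Hd sigma. exists (1 + 3 * sigma ^ 2).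
  intros reg Hreg P A h r c Hr Hball Hsig Hh HA.
  destruct (BTinv_props d P r c Hd Hr Hball) as (HL & HR & HN).
  set (E := h ^ 2 * gradnorm2 d P A). set (V := intK d P (fun _ => 1)).
  assert (HE : 0 <= E) by apply gradbound_nonneg.
  assert (HV : 0 <= V) by (apply intK_one_nonneg; auto).
  assert (Hs0 : 0 <= sigma).
  { pose proof (Hsig O O ltac:(lia) ltac:(lia)). pose proof (edist_nonneg d (P O) (P O)).
    apply (Rmult_le_reg_r r); auto. lra. }
  (* the gradient is constant on K *)
  replace (intK d P (fun x => gradsq d (phiK d P A) x)) with (gradnorm2 d P A * V).
  2:{ unfold V. rewrite <- intK_const. f_equal. apply functional_extensionality. intros. symmetry. apply gradsq_val. }
  assert (T1 : intK d P (fun x => normsq d (msub (p1interp d P (fun j => mfun d (Bfun reg) (A j)) x)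
              (mfun d (Bfun reg) (phiK d P A x)))) <= E * V).
  { apply intK_bound; auto. intros x Hx. apply interp_error_pt; auto. }
  assert (T2 : bigmax2 d (fun m p => intK d P (fun x => normsq d
        (msub (Lambda d reg P A m p) (mscale (kron m p) (mfun d (Bfun reg) (phiK d P A x)))))) <=
        ((3 * sigma / 2) ^ 2 * E) * V).
  { apply bigmax2_le. { apply Rmult_le_pos; auto. apply Rmult_le_pos; auto. apply pow2_ge_0. }
    intros m p Hm Hp. apply intK_bound; auto. { apply Rmult_le_pos; auto. apply pow2_ge_0. }
    intros x Hx. apply Lambda_error_pt; auto.
    apply (Lambda_coeff_bound d P r sigma m p); auto. }
  assert (0 <= sigma ^ 2 * (E * V)) by (apply Rmult_le_pos; [apply pow2_ge_0 | apply Rmult_le_pos; auto]).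
  unfold E in *. nra.
Qed.
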